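(* Let $X$ be compact Hausdorff, $\alpha:C(X)\to C(X)$ a unital *-monomorphism and $\varphi:X\to X$ the continuous surjection with $\alpha(a)=a\circ\varphi$. Then $\alpha$ is of finite type if and only if $\varphi$ is a local homeomorphism. Moreover, a transfer operator $L:C(X)\to C(X)$ for $\alpha$ is of finite type if and only if $L(a)(y)=\sum_{x\in\varphi^{-1}(y)}\varrho(x)a(x)$ for a continuous $\varrho:X\to(0,1]$ (strictly positive) with $\sum_{x\in\varphi^{-1}(y)}\varrho(x)=1$ for all $y$, in which case $\varphi$ is a local homeomorphism and a quasi-basis for $L$ is given by $u_i=\sqrt{v_i/\varrho}$, $i=1,\dots,n$, where $\{v_i\}_{i=1}^n\subseteq C(X)$ is any partition of unity subordinate to an open cover $\{U_i\}_{i=1}^n$ of $X$ such that each $\varphi|_{U_i}:U_i\to\varphi(U_i)$ is a homeomorphism.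
   Context: A (unital) transfer operator for $\alpha$ is a positive linear map $L:C(X)\to C(X)$ with $L(1)=1$ and $L(\alpha(a)b)=aL(b)$ for all $a,b$. $L$ is of finite type if there exist $u_1,\dots,u_N\in C(X)$ (a quasi-basis) with $a=\sum_{i=1}^Nu_i\alpha(L(u_i^*a))$ for all $a\in C(X)$. $\alpha$ is of finite type if it admits a transfer operator of finite type. *)

From Stdlib Require Import Reals List.
Open Scope R_scope.

Definition Cplx : Type := (R * R)%type.
Definition Cadd (z w : Cplx) : Cplx := (fst z + fst w, snd z + snd w).
Definition Copp (z : Cplx) : Cplx := (- fst z, - snd z).
Definition Cmul (z w : Cplx) : Cplx :=
  (fst z * fst w - snd z * snd w, fst z * snd w + snd z * fst w).
Definition Cconj (z : Cplx) : Cplx := (fst z, - snd z).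
Definition RtoC (r : R) : Cplx := (r, 0).
Definition C0 : Cplx := RtoC 0.
Definition C1 : Cplx := RtoC 1.
Definition Cmod (z : Cplx) : R := sqrt (fst z * fst z + snd z * snd z).
(** z >= 0 in the C*-algebra C *)
Definition Cnonneg (z : Cplx) : Prop := snd z = 0 /\ 0 <= fst z.

Fixpoint Csum (n : nat) (f : nat -> Cplx) : Cplx :=
  match n with O => C0 | S m => Cadd (Csum m f) (f m) end.
Fixpoint Rsum (n : nat) (f : nat -> R) : R :=
  match n with O => 0 | S m => Rsum m f + f m end.
Fixpoint Csum_list {X : Type} (l : list X) (f : X -> Cplx) : Cplx :=
  match l with nil => C0 | x :: l' => Cadd (f x) (Csum_list l' f) end.
Fixpoint Rsum_list {X : Type} (l : list X) (f : X -> R) : R :=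
  match l with nil => 0 | x :: l' => f x + Rsum_list l' f end.

Record TopSpace : Type := {
  pt :> Type;
  is_open : (pt -> Prop) -> Prop;
  open_full : is_open (fun _ => True);
  open_inter : forall U V, is_open U -> is_open V -> is_open (fun x => U x /\ V x);
  open_union : forall F : (pt -> Prop) -> Prop,
      (forall U, F U -> is_open U) -> is_open (fun x => exists U, F U /\ U x)
}.
Arguments is_open {t} _.

Definition compact_space (X : TopSpace) : Prop :=
  forall F : (X -> Prop) -> Prop,
    (forall U, F U -> is_open U) -> (forall x, exists U, F U /\ U x) ->
    exists l : list (X -> Prop), (forall U, In U l -> F U) /\
                                 (forall x, exists U, In U l /\ U x).

Definition hausdorff (X : TopSpace) : Prop :=
  forall x y : X, x <> y -> exists U V, is_open U /\ is_open V /\ U x /\ V y /\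
                            (forall z, ~ (U z /\ V z)).

Definition top_continuous {X Y : TopSpace} (f : X -> Y) : Prop :=
  forall V, is_open V -> is_open (fun x => V (f x)).

Definition contC {X : TopSpace} (f : X -> Cplx) : Prop :=
  forall x eps, 0 < eps -> exists U, is_open U /\ U x /\
    forall y, U y -> Cmod (Cadd (f y) (Copp (f x))) < eps.
Definition contR {X : TopSpace} (f : X -> R) : Prop :=
  forall x eps, 0 < eps -> exists U, is_open U /\ U x /\
    forall y, U y -> Rabs (f y - f x) < eps.

Definition img {X Y : Type} (f : X -> Y) (V : X -> Prop) : Y -> Prop :=
  fun y => exists x, V x /\ f x = y.

Definition top_closure {X : TopSpace} (S : X -> Prop) : X -> Prop :=
  fun x => forall U, is_open U -> U x -> exists z, U z /\ S z.

(** f restricted to U is a homeomorphism onto f(U) (subspace topologies);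
   continuity of f is assumed globally. *)
Definition homeo_onto_image {X : TopSpace} (f : X -> X) (U : X -> Prop) : Prop :=
  (forall x y, U x -> U y -> f x = f y -> x = y) /\
  (forall V, is_open V -> exists W, is_open W /\
     forall y, img f (fun x => U x /\ V x) y <-> (W y /\ img f U y)).

Definition local_homeo {X : TopSpace} (f : X -> X) : Prop :=
  top_continuous f /\
  forall x, exists U, is_open U /\ U x /\ is_open (img f U) /\ homeo_onto_image f U.

(** * Operators on C(X), represented as maps on X -> C, only their behaviour
   on top_continuous functions being relevant. *)
Section Ops.
Context {X : TopSpace}.

Definition alpha_of (phi : X -> X) (a : X -> Cplx) : X -> Cplx := fun x => a (phi x).

Definition is_transfer_operator (phi : X -> X) (L : (X -> Cplx) -> (X -> Cplx)) : Prop :=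
  (forall a, contC a -> contC (L a)) /\
  (forall a b, contC a -> contC b -> forall y,
      L (fun x => Cadd (a x) (b x)) y = Cadd (L a y) (L b y)) /\
  (forall (c : Cplx) a, contC a -> forall y,
      L (fun x => Cmul c (a x)) y = Cmul c (L a y)) /\
  (forall a, contC a -> (forall x, Cnonneg (a x)) -> forall y, Cnonneg (L a y)) /\
  (forall y, L (fun _ => C1) y = C1) /\
  (forall a b, contC a -> contC b -> forall y,
      L (fun x => Cmul (alpha_of phi a x) (b x)) y = Cmul (a y) (L b y)).

Definition is_quasi_basis (phi : X -> X) (L : (X -> Cplx) -> (X -> Cplx))
    (N : nat) (u : nat -> X -> Cplx) : Prop :=
  (forall i, (i < N)%nat -> contC (u i)) /\
  forall a, contC a -> forall x,
    a x = Csum N (fun i => Cmul (u i x)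
                  (alpha_of phi (L (fun z => Cmul (Cconj (u i z)) (a z))) x)).

Definition transfer_finite_type (phi : X -> X) (L : (X -> Cplx) -> (X -> Cplx)) : Prop :=
  exists N u, is_quasi_basis phi L N u.

Definition alpha_finite_type (phi : X -> X) : Prop :=
  exists L, is_transfer_operator phi L /\ transfer_finite_type phi L.

Definition fibre_rep (phi : X -> X) (L : (X -> Cplx) -> (X -> Cplx)) (rho : X -> R) : Prop :=
  contR rho /\ (forall x, 0 < rho x <= 1) /\
  forall y, exists l : list X, NoDup l /\ (forall x, In x l <-> phi x = y) /\
    Rsum_list l rho = 1 /\
    forall a, contC a -> L a y = Csum_list l (fun x => Cmul (RtoC (rho x)) (a x)).

Definition partition_of_unity_subordinate (n : nat) (U : nat -> X -> Prop)
    (v : nat -> X -> R) : Prop :=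
  (forall i, (i < n)%nat -> contR (v i) /\ (forall x, 0 <= v i x <= 1) /\
      (forall x, top_closure (fun z => v i z <> 0) x -> U i x)) /\
  (forall x, Rsum n (fun i => v i x) = 1).

Definition open_cover_homeo (phi : X -> X) (n : nat) (U : nat -> X -> Prop) : Prop :=
  (forall i, (i < n)%nat -> is_open (U i) /\ homeo_onto_image phi (U i)) /\
  (forall x, exists i, (i < n)%nat /\ U i x).

End Ops.

From Pilot Require Import Defs.
From Stdlib Require Import Reals List Lra Lia Psatz ZArith.
From Stdlib Require Import FunctionalExtensionality PropExtensionality Classical ClassicalEpsilon.
Open Scope R_scope.

(* A transfer operator [L] with a quasi-basis [u] has uniformly bounded fibres: bumps with
   disjoint supports at the points of a fibre over [y] have [L]-values summing to at most
   [L 1 y = 1], while the quasi-basis identity bounds each of them from below.  Positivity and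
   the module property make [L] local ([L a y] only depends on [a] on the fibre over [y]), so [L]
   is the fibre sum with weight [rho = 1 / sum_i |u_i|^2].  Conversely, for a fibre sum, [L]
   applied to bumps shows that [phi] is open and locally injective, hence a local homeomorphism,
   and [sqrt (v_i / rho)] is a quasi-basis because each [v_i] lives where [phi] is injective.
   Finally, for a local homeomorphism, averaging over the (finite) fibres is a transfer operator
   of finite type, written with a partition of unity subordinate to a finite cover by open sets
   on which [phi] is a homeomorphism onto an open image. *)

Lemma Cplx_eq (z w : Cplx) : fst z = fst w -> snd z = snd w -> z = w.
Proof. destruct z, w; simpl; intros; subst; reflexivity. Qed.

Ltac Csimpl := unfold Cadd, Copp, Cmul, Cconj, RtoC, Defs.C0, Defs.C1 in *; simpl in *.
Ltac Cring := apply Cplx_eq; Csimpl; ring.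

Lemma Rabs_le_bounds a b : Rabs a <= b -> - b <= a <= b.
Proof. intros H. pose proof (Rle_abs a). pose proof (Rle_abs (- a)). rewrite Rabs_Ropp in *. lra. Qed.

Lemma fst_Csum n f : fst (Csum n f) = Rsum n (fun i => fst (f i)).
Proof. induction n; simpl; auto. rewrite IHn; reflexivity. Qed.
Lemma snd_Csum n f : snd (Csum n f) = Rsum n (fun i => snd (f i)).
Proof. induction n; simpl; auto. rewrite IHn; reflexivity. Qed.
Lemma fst_Csum_list {T} (l : list T) f : fst (Csum_list l f) = Rsum_list l (fun i => fst (f i)).
Proof. induction l; simpl; auto. rewrite IHl; reflexivity. Qed.
Lemma snd_Csum_list {T} (l : list T) f : snd (Csum_list l f) = Rsum_list l (fun i => snd (f i)).
Proof. induction l; simpl; auto. rewrite IHl; reflexivity. Qed.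

Lemma Rsum_ext n f g : (forall i, (i < n)%nat -> f i = g i) -> Rsum n f = Rsum n g.
Proof. induction n; simpl; intros; auto. rewrite IHn, H; auto. Qed.
Lemma Rsum_scal n c f : Rsum n (fun i => c * f i) = c * Rsum n f.
Proof. induction n; simpl; [ring|]. rewrite IHn; ring. Qed.
Lemma Rsum_0 n : Rsum n (fun _ => 0) = 0.
Proof. induction n; simpl; auto. rewrite IHn; ring. Qed.
Lemma Rsum_const n k : Rsum n (fun _ => k) = INR n * k.
Proof. induction n; simpl; [ring|]. rewrite IHn. destruct n; simpl; ring. Qed.
Lemma Rsum_nonneg n f : (forall i, (i < n)%nat -> 0 <= f i) -> 0 <= Rsum n f.
Proof. induction n; simpl; intros H; [lra|]. pose proof (H n (Nat.lt_succ_diag_r n)). pose proof (IHn ltac:(auto)). lra. Qed.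
Lemma Rsum_le n f g : (forall i, (i < n)%nat -> f i <= g i) -> Rsum n f <= Rsum n g.
Proof. induction n; simpl; intros H; [lra|]. pose proof (H n (Nat.lt_succ_diag_r n)). pose proof (IHn ltac:(auto)). lra. Qed.
Lemma Rsum_ge_elem n f i : (forall j, (j < n)%nat -> 0 <= f j) -> (i < n)%nat -> f i <= Rsum n f.
Proof.
  induction n; intros H Hi; [lia|]. simpl. destruct (Nat.eq_dec i n) as [->|Hne].
  - assert (0 <= Rsum n f) by (apply Rsum_nonneg; auto). lra.
  - assert (f i <= Rsum n f) by (apply IHn; auto; lia). assert (0 <= f n) by auto. lra.
Qed.

Lemma Rsum_list_ext {T} (l : list T) f g : (forall i, In i l -> f i = g i) -> Rsum_list l f = Rsum_list l g.
Proof. induction l; simpl; intros; auto. rewrite IHl, H; auto. Qed.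
Lemma Rsum_list_scal {T} (l : list T) c f : Rsum_list l (fun i => c * f i) = c * Rsum_list l f.
Proof. induction l; simpl; [ring|]. rewrite IHl; ring. Qed.
Lemma Rsum_list_const {T} (l : list T) k : Rsum_list l (fun _ => k) = INR (length l) * k.
Proof. induction l; simpl; [ring|]. rewrite IHl. destruct (length l); simpl; ring. Qed.
Lemma Rsum_list_zero {T} (l : list T) f : (forall z, In z l -> f z = 0) -> Rsum_list l f = 0.
Proof. induction l; simpl; intros H; auto. rewrite IHl, H; auto. ring. Qed.
Lemma Rsum_list_nonneg {T} (l : list T) f : (forall i, In i l -> 0 <= f i) -> 0 <= Rsum_list l f.
Proof. induction l; simpl; intros H; [lra|]. pose proof (H a (or_introl eq_refl)). pose proof (IHl ltac:(auto)). lra. Qed.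
Lemma Rsum_list_le {T} (l : list T) f g : (forall i, In i l -> f i <= g i) -> Rsum_list l f <= Rsum_list l g.
Proof. induction l; simpl; intros H; [lra|]. pose proof (H a (or_introl eq_refl)). pose proof (IHl ltac:(auto)). lra. Qed.
Lemma Rsum_list_ge_elem {T} (l : list T) f x :
  (forall i, In i l -> 0 <= f i) -> In x l -> f x <= Rsum_list l f.
Proof.
  induction l; simpl; intros H Hin; [contradiction|]. destruct Hin as [<-|Hin].
  - assert (0 <= Rsum_list l f) by (apply Rsum_list_nonneg; auto). lra.
  - assert (f x <= Rsum_list l f) by auto. assert (0 <= f a) by auto. lra.
Qed.
Lemma Rsum_list_ge_two {T} (l : list T) f x y : NoDup l -> (forall i, In i l -> 0 <= f i) ->
  In x l -> In y l -> x <> y -> f x + f y <= Rsum_list l f.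
Proof.
  induction l; simpl; intros Hnd H Hx Hy Hxy; [contradiction|]. inversion Hnd; subst.
  destruct Hx as [<-|Hx]; destruct Hy as [<-|Hy].
  - congruence.
  - assert (f y <= Rsum_list l f) by (apply Rsum_list_ge_elem; auto). lra.
  - assert (f x <= Rsum_list l f) by (apply Rsum_list_ge_elem; auto). lra.
  - assert (f x + f y <= Rsum_list l f) by auto. assert (0 <= f a) by auto. lra.
Qed.
Lemma Rsum_list_single {T} (l : list T) f x : NoDup l -> In x l ->
  (forall z, In z l -> z <> x -> f z = 0) -> Rsum_list l f = f x.
Proof.
  induction l; simpl; intros Hnd Hin H; [contradiction|]. inversion Hnd; subst.
  destruct Hin as [<-|Hin].
  - rewrite Rsum_list_zero; [ring|]. intros i Hi. apply H; auto. intro; subst; contradiction.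
  - rewrite IHl, H; auto; [ring|]. intro; subst; contradiction.
Qed.
Lemma Rsum_list_disjoint_le_1 {T} (l : list T) f : NoDup l -> (forall i, In i l -> 0 <= f i <= 1) ->
  (forall x y, In x l -> In y l -> f x <> 0 -> f y <> 0 -> x = y) -> Rsum_list l f <= 1.
Proof.
  induction l; simpl; intros Hnd H Hu; [lra|]. inversion Hnd; subst.
  destruct (Req_dec (f a) 0) as [E|E].
  - rewrite E. assert (Rsum_list l f <= 1) by (apply IHl; auto). lra.
  - rewrite Rsum_list_zero. { assert (f a <= 1) by (apply H; auto). lra. }
    intros z Hz. destruct (Req_dec (f z) 0); auto. exfalso.
    assert (a = z) by (apply Hu; auto). subst; contradiction.
Qed.

Lemma Csum_ext n f g : (forall i, (i < n)%nat -> f i = g i) -> Csum n f = Csum n g.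
Proof. induction n; simpl; intros; auto. rewrite IHn, H; auto. Qed.
Lemma Csum_add n (f g : nat -> Cplx) : Csum n (fun i => Cadd (f i) (g i)) = Cadd (Csum n f) (Csum n g).
Proof. induction n; simpl; [Cring|]. rewrite IHn. Cring. Qed.
Lemma Csum_scal n c (f : nat -> Cplx) : Csum n (fun i => Cmul c (f i)) = Cmul c (Csum n f).
Proof. induction n; simpl; [Cring|]. rewrite IHn. Cring. Qed.
Lemma Csum_RtoC_mul n (r : nat -> R) (z : Cplx) :
  Csum n (fun i => Cmul (RtoC (r i)) z) = Cmul (RtoC (Rsum n r)) z.
Proof.
  apply Cplx_eq; rewrite ?fst_Csum, ?snd_Csum; simpl.
  - rewrite (Rsum_ext n _ (fun i => fst z * r i)) by (intros; ring). rewrite Rsum_scal. ring.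
  - rewrite (Rsum_ext n _ (fun i => snd z * r i)) by (intros; ring). rewrite Rsum_scal. ring.
Qed.
Lemma Csum_nonneg n (f : nat -> Cplx) : (forall i, (i < n)%nat -> Cnonneg (f i)) -> Cnonneg (Csum n f).
Proof.
  unfold Cnonneg. induction n; simpl; intros H; [Csimpl; lra|].
  destruct IHn as [A B]; auto. destruct (H n) as [C D]; auto. simpl. lra.
Qed.
Lemma Csum_list_ext {T} (l : list T) f g : (forall i, In i l -> f i = g i) -> Csum_list l f = Csum_list l g.
Proof. induction l; simpl; intros; auto. rewrite IHl, H; auto. Qed.
Lemma Csum_list_single {T} (l : list T) f x : NoDup l -> In x l ->
  (forall z, In z l -> z <> x -> f z = Defs.C0) -> Csum_list l f = f x.
Proof.
  intros Hnd Hx H. apply Cplx_eq; [rewrite fst_Csum_list | rewrite snd_Csum_list];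
    apply (Rsum_list_single l (fun i => _ (f i))); auto; intros; rewrite H; auto.
Qed.

Section Continuity.
Context {X : TopSpace}.

Lemma contC_ext (f g : X -> Cplx) : (forall x, f x = g x) -> contC f -> contC g.
Proof.
  intros H Hf x eps He. destruct (Hf x eps He) as [U [? [? ?]]].
  exists U; repeat split; auto. intros; rewrite <- !H; auto.
Qed.

Lemma contR_const (c : R) : contR (fun _ : X => c).
Proof.
  intros x eps He. exists (fun _ => True). split; [apply open_full|split; auto].
  intros; rewrite Rminus_diag, Rabs_R0; auto.
Qed.

Lemma contR_compose1 (f : X -> R) (h : R -> R) : contR f ->
  (forall x eps, 0 < eps -> exists d, 0 < d /\
     forall a, Rabs (a - f x) < d -> Rabs (h a - h (f x)) < eps) ->
  contR (fun x => h (f x)).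
Proof.
  intros Hf Hh x eps He. destruct (Hh x eps He) as [d [Hd Hd']].
  destruct (Hf x d Hd) as [U [HU [HUx HUy]]]. exists U; repeat split; auto.
Qed.

Lemma contR_compose2 (f g : X -> R) (h : R -> R -> R) : contR f -> contR g ->
  (forall x eps, 0 < eps -> exists d, 0 < d /\ forall a b,
     Rabs (a - f x) < d -> Rabs (b - g x) < d -> Rabs (h a b - h (f x) (g x)) < eps) ->
  contR (fun x => h (f x) (g x)).
Proof.
  intros Hf Hg Hh x eps He. destruct (Hh x eps He) as [d [Hd Hd']].
  destruct (Hf x d Hd) as [U [HU [HUx HUy]]]. destruct (Hg x d Hd) as [V [HV [HVx HVy]]].
  exists (fun z => U z /\ V z); repeat split; auto. apply open_inter; auto. intros y [? ?]; auto.
Qed.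

Lemma contR_continuity_pt (f : X -> R) (h : R -> R) :
  contR f -> (forall x, continuity_pt h (f x)) -> contR (fun x => h (f x)).
Proof.
  intros Hf Hh. apply contR_compose1; auto. intros x eps He.
  destruct (Hh x eps He) as [d [Hd H']]. exists d; split; auto.
  intros b Hb. destruct (Req_dec b (f x)) as [->|Hne]; [rewrite Rminus_diag, Rabs_R0; auto|].
  apply H'. split; [split; [exact I| auto] | exact Hb].
Qed.

Lemma contR_lipschitz (f : X -> R) (h : R -> R) :
  contR f -> (forall a b, Rabs (h a - h b) <= Rabs (a - b)) -> contR (fun x => h (f x)).
Proof.
  intros Hf Hh. apply contR_compose1; auto. intros x eps He. exists eps; split; auto.
  intros a Ha. eapply Rle_lt_trans; eauto.
Qed.

Lemma contR_plus (f g : X -> R) : contR f -> contR g -> contR (fun x => f x + g x).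
Proof.
  intros; apply contR_compose2; auto. intros x eps He. exists (eps/2); split; [lra|].
  intros a b Ha Hb. replace (a + b - (f x + g x)) with ((a - f x) + (b - g x)) by ring.
  eapply Rle_lt_trans; [apply Rabs_triang| lra].
Qed.

Lemma contR_opp (f : X -> R) : contR f -> contR (fun x => - f x).
Proof.
  intros; apply contR_lipschitz; auto. intros a b.
  replace (- a - - b) with (- (a - b)) by ring. rewrite Rabs_Ropp; lra.
Qed.

Lemma contR_minus (f g : X -> R) : contR f -> contR g -> contR (fun x => f x - g x).
Proof. intros. apply (contR_plus f (fun x => - g x)); auto. apply contR_opp; auto. Qed.

Lemma contR_abs (f : X -> R) : contR f -> contR (fun x => Rabs (f x)).
Proof. intros. apply contR_lipschitz; auto. intros; apply Rabs_triang_inv2. Qed.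

Lemma contR_min_const (f : X -> R) (c : R) : contR f -> contR (fun x => Rmin (f x) c).
Proof.
  intros Hf. apply (contR_lipschitz f (fun a => Rmin a c)); auto. intros a b.
  unfold Rmin; destruct (Rle_dec a c), (Rle_dec b c); unfold Rabs;
    repeat match goal with |- context [Rcase_abs ?x] => destruct (Rcase_abs x) end; lra.
Qed.

Lemma contR_max_0 (f : X -> R) : contR f -> contR (fun x => Rmax (f x) 0).
Proof.
  intros Hf. apply (contR_lipschitz f (fun a => Rmax a 0)); auto. intros a b.
  unfold Rmax; destruct (Rle_dec a 0), (Rle_dec b 0); unfold Rabs;
    repeat match goal with |- context [Rcase_abs ?x] => destruct (Rcase_abs x) end; lra.
Qed.

Lemma Rmult_cont_delta (a0 b0 eps : R) : 0 < eps -> exists d, 0 < d /\ forall a b,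
  Rabs (a - a0) < d -> Rabs (b - b0) < d -> Rabs (a * b - a0 * b0) < eps.
Proof.
  intros He. set (K := Rabs a0 + Rabs b0 + 1).
  assert (HK : 0 < K) by (unfold K; pose proof (Rabs_pos a0); pose proof (Rabs_pos b0); lra).
  assert (Hd : 0 < Rmin 1 (eps / K)) by (apply Rmin_glb_lt; [lra| apply Rdiv_lt_0_compat; lra]).
  exists (Rmin 1 (eps / K)). split; auto.
  intros a b Ha Hb. pose proof (Rmin_l 1 (eps/K)). pose proof (Rmin_r 1 (eps/K)).
  set (d := Rmin 1 (eps / K)) in *.
  replace (a * b - a0 * b0) with ((a - a0) * (b - b0) + (a - a0) * b0 + a0 * (b - b0)) by ring.
  assert (Rabs ((a - a0) * (b - b0)) < d * 1).
  { rewrite Rabs_mult. apply Rle_lt_trans with (Rabs (a - a0) * 1).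
    - apply Rmult_le_compat_l; [apply Rabs_pos | lra].
    - apply Rmult_lt_compat_r; lra. }
  assert (Rabs ((a - a0) * b0) <= d * Rabs b0)
    by (rewrite Rabs_mult; apply Rmult_le_compat_r; try apply Rabs_pos; lra).
  assert (Rabs (a0 * (b - b0)) <= Rabs a0 * d)
    by (rewrite Rabs_mult; apply Rmult_le_compat_l; try apply Rabs_pos; lra).
  assert (d * K <= eps)
    by (apply Rle_trans with (eps / K * K); [apply Rmult_le_compat_r; lra | right; field; lra]).
  eapply Rle_lt_trans; [apply Rabs_triang|].
  eapply Rle_lt_trans; [apply Rplus_le_compat_r, Rabs_triang|].
  unfold K in *; nra.
Qed.

Lemma contR_mult (f g : X -> R) : contR f -> contR g -> contR (fun x => f x * g x).
Proof. intros; apply contR_compose2; auto. intros x eps He. apply Rmult_cont_delta; auto. Qed.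

Lemma contR_scal (c : R) (f : X -> R) : contR f -> contR (fun x => c * f x).
Proof. intros. apply (contR_mult (fun _ => c) f); auto. apply contR_const. Qed.

Lemma contR_inv (f : X -> R) : contR f -> (forall x, f x <> 0) -> contR (fun x => / f x).
Proof.
  intros Hf Hn. apply contR_continuity_pt; auto. intros x.
  exact (continuity_pt_inv id (f x) (derivable_continuous_pt _ _ (derivable_pt_id _)) (Hn x)).
Qed.

Lemma contR_div (f g : X -> R) : contR f -> contR g -> (forall x, g x <> 0) -> contR (fun x => f x / g x).
Proof. intros. apply (contR_mult f (fun x => / g x)); auto. apply contR_inv; auto. Qed.

Lemma contR_sqrt (f : X -> R) : contR f -> (forall x, 0 <= f x) -> contR (fun x => sqrt (f x)).
Proof. intros Hf Hn. apply contR_continuity_pt; auto. intros x. apply continuity_pt_sqrt, Hn. Qed.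

Lemma contR_Rsum (n : nat) (f : nat -> X -> R) :
  (forall i, (i < n)%nat -> contR (f i)) -> contR (fun x => Rsum n (fun i => f i x)).
Proof. induction n; simpl; intros. apply contR_const. apply (contR_plus _ (f n)); auto. Qed.

Lemma contR_Rsum_list {T} (l : list T) (f : T -> X -> R) :
  (forall i, In i l -> contR (f i)) -> contR (fun x => Rsum_list l (fun i => f i x)).
Proof. induction l; simpl; intros. apply contR_const. apply (contR_plus (f a)); auto. Qed.

Lemma contR_compose_cont (phi : X -> X) (f : X -> R) :
  top_continuous phi -> contR f -> contR (fun x => f (phi x)).
Proof.
  intros Hp Hf x eps He. destruct (Hf (phi x) eps He) as [U [HU [HUx HUy]]].
  exists (fun z => U (phi z)); repeat split; auto.
Qed.

Lemma Rabs_fst_le_Cmod z : Rabs (fst z) <= Cmod z.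
Proof. unfold Cmod. rewrite <- sqrt_Rsqr_abs. apply sqrt_le_1_alt. unfold Rsqr. nra. Qed.
Lemma Rabs_snd_le_Cmod z : Rabs (snd z) <= Cmod z.
Proof. unfold Cmod. rewrite <- sqrt_Rsqr_abs. apply sqrt_le_1_alt. unfold Rsqr. nra. Qed.
Lemma Cmod_le_Rabs_sum z : Cmod z <= Rabs (fst z) + Rabs (snd z).
Proof.
  unfold Cmod. pose proof (Rabs_pos (fst z)). pose proof (Rabs_pos (snd z)).
  rewrite <- (sqrt_Rsqr (Rabs (fst z) + Rabs (snd z))) by lra. apply sqrt_le_1_alt. unfold Rsqr.
  assert (fst z * fst z = Rabs (fst z) * Rabs (fst z))
    by (rewrite <- Rabs_mult; rewrite Rabs_pos_eq; nra).
  assert (snd z * snd z = Rabs (snd z) * Rabs (snd z))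
    by (rewrite <- Rabs_mult; rewrite Rabs_pos_eq; nra).
  nra.
Qed.

Lemma contC_fst (f : X -> Cplx) : contC f -> contR (fun x => fst (f x)).
Proof.
  intros Hf x eps He. destruct (Hf x eps He) as [U [? [? H']]]. exists U; repeat split; auto.
  intros y Hy. eapply Rle_lt_trans; [|apply (H' y Hy)].
  exact (Rabs_fst_le_Cmod (Cadd (f y) (Copp (f x)))).
Qed.
Lemma contC_snd (f : X -> Cplx) : contC f -> contR (fun x => snd (f x)).
Proof.
  intros Hf x eps He. destruct (Hf x eps He) as [U [? [? H']]]. exists U; repeat split; auto.
  intros y Hy. eapply Rle_lt_trans; [|apply (H' y Hy)].
  exact (Rabs_snd_le_Cmod (Cadd (f y) (Copp (f x)))).
Qed.
Lemma contC_pair (f g : X -> R) : contR f -> contR g -> contC (fun x => (f x, g x)).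
Proof.
  intros Hf Hg x eps He.
  destruct (Hf x (eps/2)) as [U [? [? HU]]]; [lra|]. destruct (Hg x (eps/2)) as [V [? [? HV]]]; [lra|].
  exists (fun z => U z /\ V z); repeat split; auto. apply open_inter; auto.
  intros y [Hu Hv]. eapply Rle_lt_trans; [apply Cmod_le_Rabs_sum|]. Csimpl.
  specialize (HU y Hu). specialize (HV y Hv). unfold Rminus in HU, HV. lra.
Qed.
Lemma contC_split (f : X -> Cplx) :
  contR (fun x => fst (f x)) -> contR (fun x => snd (f x)) -> contC f.
Proof.
  intros. apply (contC_ext (fun x => (fst (f x), snd (f x)))).
  intros; destruct (f x); auto. apply contC_pair; auto.
Qed.

Lemma contC_RtoC (f : X -> R) : contR f -> contC (fun x => RtoC (f x)).
Proof. intros. apply contC_pair; auto. apply contR_const. Qed.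
Lemma contC_const (c : Cplx) : contC (fun _ : X => c).
Proof. apply contC_split; apply contR_const. Qed.
Lemma contC_add (f g : X -> Cplx) : contC f -> contC g -> contC (fun x => Cadd (f x) (g x)).
Proof. intros. apply contC_split; simpl; apply contR_plus; first [apply contC_fst | apply contC_snd]; auto. Qed.
Lemma contC_opp (f : X -> Cplx) : contC f -> contC (fun x => Copp (f x)).
Proof. intros. apply contC_split; simpl; apply contR_opp; first [apply contC_fst | apply contC_snd]; auto. Qed.
Lemma contC_mul (f g : X -> Cplx) : contC f -> contC g -> contC (fun x => Cmul (f x) (g x)).
Proof.
  intros. apply contC_split; simpl;
    [apply contR_minus | apply contR_plus]; apply contR_mult; first [apply contC_fst | apply contC_snd]; auto.
Qed.
Lemma contC_conj (f : X -> Cplx) : contC f -> contC (fun x => Cconj (f x)).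
Proof. intros. apply contC_split; simpl; [apply contC_fst | apply contR_opp, contC_snd]; auto. Qed.
Lemma contC_Csum (n : nat) (f : nat -> X -> Cplx) :
  (forall i, (i < n)%nat -> contC (f i)) -> contC (fun x => Csum n (fun i => f i x)).
Proof. induction n; simpl; intros. apply contC_const. apply (contC_add _ (f n)); auto. Qed.
Lemma contC_Csum_list {T} (l : list T) (f : T -> X -> Cplx) :
  (forall i, In i l -> contC (f i)) -> contC (fun x => Csum_list l (fun i => f i x)).
Proof. induction l; simpl; intros. apply contC_const. apply (contC_add (f a)); auto. Qed.

End Continuity.

(** * Compact Hausdorff spaces *)

Definition closed {X : TopSpace} (C : X -> Prop) := is_open (fun x => ~ C x).

(* Compactness of a subset [K], with covers indexed by the points of [K]:
   each [z] in [K] supplies an open set [G z] containing [z]. *)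
Definition compact_set {X : TopSpace} (K : X -> Prop) := forall G : X -> X -> Prop,
  (forall z, K z -> is_open (G z) /\ G z z) ->
  exists lz, (forall z, In z lz -> K z) /\ (forall x, K x -> exists z, In z lz /\ G z x).

Section Topology.
Context {X : TopSpace}.

Lemma is_open_ext (U V : X -> Prop) : (forall x, U x <-> V x) -> is_open U -> is_open V.
Proof.
  intros H HU. replace V with U; auto.
  apply functional_extensionality; intro x. apply propositional_extensionality; auto.
Qed.

Lemma open_indexed_union {T} (P : T -> Prop) (G : T -> X -> Prop) :
  (forall t, P t -> is_open (G t)) -> is_open (fun w => exists t, P t /\ G t w).
Proof.
  intros H. apply (is_open_ext (fun w => exists U, (fun U => exists t, P t /\ U = G t) U /\ U w)).
  - intros w; split; [intros [U [[t [Hp ->]] Hw]]; eauto | intros [t [Hp Hw]]; exists (G t); eauto].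
  - apply open_union. intros U [t [Hp ->]]; auto.
Qed.

Lemma open_empty : is_open (fun _ : X => False).
Proof.
  apply (is_open_ext (fun w => exists t, False /\ t w)); [firstorder|].
  apply (open_indexed_union (fun _ : X -> Prop => False) (fun t => t)); tauto.
Qed.

Lemma open_list_inter {T} (l : list T) (P : T -> Prop) (G : T -> X -> Prop) :
  (forall t, In t l -> P t -> is_open (G t)) -> is_open (fun w => forall t, In t l -> P t -> G t w).
Proof.
  induction l; intros H.
  - apply (is_open_ext (fun _ => True)); [simpl; tauto | apply open_full].
  - apply (is_open_ext (fun w => (P a -> G a w) /\ (forall t, In t l -> P t -> G t w))).
    + intros w; split; [intros [H1 H2] t [<-|Ht] Hp; auto | intros H1; split; intros; apply H1; simpl; auto].
    + apply open_inter; [|apply IHl; intros; apply H; simpl; auto].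
      destruct (classic (P a)) as [Hp|Hp].
      * apply (is_open_ext (G a)); [tauto | apply H; simpl; auto].
      * apply (is_open_ext (fun _ => True)); [tauto | apply open_full].
Qed.

Lemma open_of_local_nbhds (S : X -> Prop) :
  (forall y, S y -> exists N, is_open N /\ N y /\ forall z, N z -> S z) -> is_open S.
Proof.
  intros H. apply (is_open_ext (fun y => exists N, (is_open N /\ forall z, N z -> S z) /\ N y)).
  - intros y; split; [intros [N [[? ?] ?]]; auto | intros Hy; destruct (H y Hy) as [N [? [? ?]]]; eauto].
  - apply (open_indexed_union (fun N => is_open N /\ _) (fun N => N)). tauto.
Qed.

Lemma closure_incl (S : X -> Prop) x : S x -> top_closure S x.
Proof. intros Sx U _ Ux; eauto. Qed.

Lemma closure_mono (S T : X -> Prop) :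
  (forall x, S x -> T x) -> forall x, top_closure S x -> top_closure T x.
Proof. intros H x Hx U HU Ux. destruct (Hx U HU Ux) as [z [? ?]]; eauto. Qed.

Lemma not_closure (S : X -> Prop) x :
  ~ top_closure S x <-> exists U, is_open U /\ U x /\ forall z, U z -> ~ S z.
Proof.
  split.
  - intros H. apply not_all_ex_not in H. destruct H as [U H]. exists U.
    destruct (classic (is_open U)); [|tauto]. destruct (classic (U x)); [|tauto].
    repeat split; auto. intros z Uz Sz. apply H; intros; eauto.
  - intros [U [HU [Ux HUS]]] Hc. destruct (Hc U HU Ux) as [z [? ?]]. eapply HUS; eauto.
Qed.

Lemma closure_closed (S : X -> Prop) : closed (top_closure S).
Proof.
  apply open_of_local_nbhds. intros x Hx. apply not_closure in Hx.
  destruct Hx as [U [HU [Ux HUS]]]. exists U; repeat split; auto.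
  intros z Uz Hz. apply not_closure in Hz; eauto.
Qed.

Lemma closed_compl_open (U : X -> Prop) : is_open U -> closed (fun x => ~ U x).
Proof. intros H. apply (is_open_ext U); auto. intros; tauto. Qed.

Lemma closed_point (x : X) : hausdorff X -> closed (fun z => z = x).
Proof.
  intros Hh. apply open_of_local_nbhds. intros w Hw.
  destruct (Hh w x Hw) as [U [V [? [? [? [? Hd]]]]]]. exists U; repeat split; auto.
  intros z Uz ->. apply (Hd x); auto.
Qed.

Lemma closed_compact (K : X -> Prop) : compact_space X -> closed K -> compact_set K.
Proof.
  intros Hc Hk G HG.
  set (F := fun U => (exists z, K z /\ U = G z) \/ U = (fun x => ~ K x)).
  destruct (Hc F) as [lU [HlU Hcov]].
  - intros U [[z [Kz ->]]| ->]; [apply HG; auto | exact Hk].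
  - intros x. destruct (classic (K x)) as [Kx|Kx].
    + exists (G x); split; [left; eauto | apply HG; auto].
    + exists (fun x => ~ K x); split; [right | ]; auto.
  - assert (Hpts : forall lV, (forall U, In U lV -> F U) -> exists lz, (forall z, In z lz -> K z) /\
                forall x, K x -> (exists U, In U lV /\ U x) -> exists z, In z lz /\ G z x).
    { induction lV as [|V lV IH]; intros HV.
      - exists nil; split; [simpl; tauto|]. intros x _ [U [[] _]].
      - destruct IH as [lz [H1 H2]]; [intros; apply HV; simpl; auto|].
        destruct (HV V (or_introl eq_refl)) as [[z [Kz ->]]| ->].
        + exists (z :: lz); split; [intros z' [<-|?]; auto|].
          intros x Kx [U [[<-|HU] Ux]]; [exists z; simpl; auto|].
          destruct (H2 x Kx) as [z' [? ?]]; eauto. exists z'; simpl; auto.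
        + exists lz; split; auto. intros x Kx [U [[<-|HU] Ux]]; [contradiction | eauto]. }
    destruct (Hpts lU HlU) as [lz [H1 H2]]. exists lz; split; auto.
Qed.

Lemma compact_full : compact_space X -> compact_set (fun _ : X => True).
Proof.
  intros Hc. apply closed_compact; auto.
  apply (is_open_ext (fun _ => False)); [tauto | apply open_empty].
Qed.

Lemma compact_image (f : X -> X) (K : X -> Prop) :
  top_continuous f -> compact_set K -> compact_set (img f K).
Proof.
  intros Hf Hk G HG. destruct (Hk (fun z w => G (f z) (f w))) as [lz [H1 H2]].
  - intros z Kz. destruct (HG (f z)) as [HG1 HG2]; [exists z; auto|].
    split; [apply (Hf (G (f z))) | ]; auto.
  - exists (map f lz); split.
    + intros y Hy. apply in_map_iff in Hy. destruct Hy as [z [<- Hz]]. exists z; auto.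
    + intros y [x [Kx <-]]. destruct (H2 x Kx) as [z [? ?]]. exists (f z); split; auto. apply in_map; auto.
Qed.

Lemma hausdorff_sep_point_compact (K : X -> Prop) (x : X) : hausdorff X -> compact_set K -> ~ K x ->
  exists U V, is_open U /\ is_open V /\ U x /\ (forall z, K z -> V z) /\ (forall z, ~ (U z /\ V z)).
Proof.
  intros Hh Hk Kx.
  assert (Hch : forall z, exists p : (X -> Prop) * (X -> Prop), K z ->
    is_open (fst p) /\ is_open (snd p) /\ fst p x /\ snd p z /\ forall w, ~ (fst p w /\ snd p w)).
  { intros z. destruct (classic (K z)) as [Kz|Kz].
    - assert (x <> z) by (intro; subst; contradiction).
      destruct (Hh x z H) as [U [V ?]]. exists (U, V); simpl; auto.
    - exists ((fun _ => True), (fun _ => True)); intros; contradiction. }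
  destruct (choice _ Hch) as [g Hg].
  destruct (Hk (fun z => snd (g z))) as [lz [H1 H2]].
  { intros z Kz; destruct (Hg z Kz) as [? [? [? [? ?]]]]; auto. }
  exists (fun w => forall z, In z lz -> True -> fst (g z) w), (fun w => exists z, In z lz /\ snd (g z) w).
  split; [apply open_list_inter; intros t Ht _; apply (Hg t (H1 t Ht))|].
  split; [apply open_indexed_union; intros t Ht; apply (Hg t (H1 t Ht))|].
  split; [intros z Hz _; apply (Hg z (H1 z Hz))|].
  split; [intros z Kz; destruct (H2 z Kz) as [z' [? ?]]; eauto|].
  intros w [Hw [z [Hz Hw']]]. destruct (Hg z (H1 z Hz)) as [? [? [? [? Hd]]]].
  apply (Hd w); split; auto.
Qed.

Lemma hausdorff_sep_compact (A B : X -> Prop) : hausdorff X -> compact_set A -> compact_set B ->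
  (forall x, A x -> ~ B x) ->
  exists U V, is_open U /\ is_open V /\ (forall z, A z -> U z) /\ (forall z, B z -> V z) /\
              (forall z, ~ (U z /\ V z)).
Proof.
  intros Hh Ha Hb Hab.
  assert (Hch : forall a, exists p : (X -> Prop) * (X -> Prop), A a -> is_open (fst p) /\ is_open (snd p) /\
    fst p a /\ (forall z, B z -> snd p z) /\ forall w, ~ (fst p w /\ snd p w)).
  { intros a. destruct (classic (A a)) as [Aa|Aa].
    - destruct (hausdorff_sep_point_compact B a Hh Hb (Hab a Aa)) as [U [V ?]]. exists (U, V); simpl; auto.
    - exists ((fun _ => True), (fun _ => True)); intros; contradiction. }
  destruct (choice _ Hch) as [g Hg].
  destruct (Ha (fun z => fst (g z))) as [lz [H1 H2]].
  { intros z Kz; destruct (Hg z Kz) as [? [? [? [? ?]]]]; auto. }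
  exists (fun w => exists z, In z lz /\ fst (g z) w), (fun w => forall z, In z lz -> True -> snd (g z) w).
  split; [apply open_indexed_union; intros t Ht; apply (Hg t (H1 t Ht))|].
  split; [apply open_list_inter; intros t Ht _; apply (Hg t (H1 t Ht))|].
  split; [intros z Az; destruct (H2 z Az) as [z' [? ?]]; eauto|].
  split; [intros z Bz z' Hz' _; apply (Hg z' (H1 z' Hz')); auto|].
  intros w [[z [Hz Hw']] Hw]. destruct (Hg z (H1 z Hz)) as [? [? [? [? Hd]]]].
  apply (Hd w); split; auto.
Qed.

Lemma normal_interpolate (A O : X -> Prop) : compact_space X -> hausdorff X -> closed A -> is_open O ->
  (forall x, A x -> O x) ->
  exists W, is_open W /\ (forall x, A x -> W x) /\ (forall x, top_closure W x -> O x).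
Proof.
  intros Hc Hh HA HO HAO.
  destruct (hausdorff_sep_compact A (fun x => ~ O x) Hh (closed_compact A Hc HA)
              (closed_compact _ Hc (closed_compl_open O HO))) as [U [V [? [? [? [? Hd]]]]]].
  { intros x Ax HO'; apply HO'; auto. }
  exists U; repeat split; auto. intros x Hx. apply NNPP. intros Hn.
  destruct (Hx V H0 (H2 x Hn)) as [z [? ?]]. apply (Hd z); auto.
Qed.

Lemma hausdorff_disjoint_nbhds (l : list X) : hausdorff X ->
  exists V : X -> X -> Prop, (forall x, In x l -> is_open (V x) /\ V x x) /\
     (forall x y w, In x l -> In y l -> V x w -> V y w -> x = y).
Proof.
  intros Hh.
  assert (Hch : forall p : X * X, exists q : (X -> Prop) * (X -> Prop), fst p <> snd p ->
    is_open (fst q) /\ is_open (snd q) /\ fst q (fst p) /\ snd q (snd p) /\ forall w, ~ (fst q w /\ snd q w)).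
  { intros [a b]. simpl. destruct (classic (a = b)) as [E|E].
    - exists ((fun _ => True), (fun _ => True)); intros; contradiction.
    - destruct (Hh a b E) as [U [V ?]]. exists (U, V); simpl; auto. }
  destruct (choice _ Hch) as [g Hg].
  exists (fun x w => forall z, In z l -> z <> x -> fst (g (x, z)) w /\ snd (g (z, x)) w). split.
  - intros x Hx. split.
    + apply open_list_inter. intros z _ Hz.
      destruct (Hg (x, z)) as [? [? ?]]; simpl; auto. destruct (Hg (z, x)) as [? [? ?]]; simpl; auto.
      apply open_inter; auto.
    + intros z _ Hz. destruct (Hg (x, z)) as [? [? [? ?]]]; simpl; auto.
      destruct (Hg (z, x)) as [? [? [? [? ?]]]]; simpl; auto.
  - intros x y w Hx Hy Vx Vy. apply NNPP. intros E.
    destruct (Vx y Hy (fun h => E (eq_sym h))) as [H1 _]. destruct (Vy x Hx E) as [_ H2].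
    destruct (Hg (x, y)) as [? [? [? [? Hd]]]]; simpl; auto. apply (Hd w); auto.
Qed.

Lemma compact_bounded (f : X -> R) : compact_space X -> contR f -> exists M, forall x, Rabs (f x) <= M.
Proof.
  intros Hc Hf.
  assert (H : forall x, exists U, is_open U /\ U x /\ forall y, U y -> Rabs (f y - f x) < 1)
    by (intros; apply Hf; lra).
  destruct (choice _ H) as [G HG]. destruct (compact_full Hc G) as [lz [_ Hl]].
  { intros z _. destruct (HG z) as [? [? ?]]; auto. }
  exists (Rsum_list lz (fun z => Rabs (f z)) + 1). intros y. destruct (Hl y I) as [z [Hz Hy]].
  destruct (HG z) as [_ [_ H3]]. specialize (H3 y Hy).
  assert (Rabs (f z) <= Rsum_list lz (fun z => Rabs (f z)))
    by (apply (Rsum_list_ge_elem lz (fun z => Rabs (f z))); auto; intros; apply Rabs_pos).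
  replace (f y) with ((f y - f z) + f z) by ring. eapply Rle_trans; [apply Rabs_triang | lra].
Qed.

End Topology.

(** * Urysohn's lemma and partitions of unity *)

(* [cnt_not P N] counts the [k < N] with [~ P k]; for [P] monotone in [k] it is the
   first index where [P] holds (or [N]). *)
Fixpoint cnt_not (P : nat -> Prop) (N : nat) : nat :=
  match N with
  | O => O
  | S M => (cnt_not P M + if excluded_middle_informative (P M) then 0 else 1)%nat
  end.

Lemma cnt_not_le P N : (cnt_not P N <= N)%nat.
Proof. induction N; simpl; auto. destruct (excluded_middle_informative (P N)); lia. Qed.

Lemma cnt_not_threshold (P : nat -> Prop) : (forall k, P k -> P (S k)) ->
  forall N k, (k < N)%nat -> (P k <-> (cnt_not P N <= k)%nat).
Proof.
  intros Hm. assert (Hm' : forall k j, (k <= j)%nat -> P k -> P j) by (intros k j H; induction H; auto).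
  induction N; intros k Hk; [lia|]. simpl.
  destruct (excluded_middle_informative (P N)) as [HP|HP].
  - destruct (Nat.eq_dec k N) as [->|Hne].
    + pose proof (cnt_not_le P N). split; intros; auto; lia.
    + rewrite Nat.add_0_r. apply IHN. lia.
  - assert (Hall : forall k, (k <= N)%nat -> ~ P k) by (intros j Hj Hpj; apply HP; eapply Hm'; eauto).
    assert (cnt_not P N = N).
    { destruct N; [reflexivity|]. pose proof (cnt_not_le P (S N)).
      assert (~ (cnt_not P (S N) <= N)%nat) by (intro Hc; apply (Hall N); [lia|]; apply (IHN N); [lia|auto]).
      lia. }
    rewrite H. split; intros Hc; [exfalso; apply (Hall k); auto; lia | lia].
Qed.

Lemma pow2_pos n : 0 < 2 ^ n.
Proof. apply pow_lt; lra. Qed.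

Lemma pow2_large eps : 0 < eps -> exists n, 3 / 2 ^ n < eps.
Proof.
  intros He. destruct (archimed (3 / eps)) as [H1 _].
  assert (Hz : (0 <= up (3 / eps))%Z).
  { apply le_IZR. assert (0 < 3 / eps) by (apply Rdiv_lt_0_compat; lra). lra. }
  exists (Z.to_nat (up (3 / eps))). set (n := Z.to_nat (up (3 / eps))).
  assert (INR n = IZR (up (3/eps))) by (unfold n; rewrite INR_IZR_INZ, Z2Nat.id; auto).
  assert (INR n <= 2 ^ n).
  { clear. induction n; [simpl; lra|]. rewrite S_INR. simpl.
    assert (1 <= 2 ^ n) by (apply pow_R1_Rle; lra). lra. }
  pose proof (pow2_pos n).
  apply (Rmult_lt_reg_r (2 ^ n)); auto. unfold Rdiv. rewrite Rmult_assoc, Rinv_l by lra.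
  apply (Rmult_lt_reg_l (/ eps)); [apply Rinv_0_lt_compat; auto|].
  replace (/ eps * (3 * 1)) with (3 / eps) by (field; lra).
  replace (/ eps * (eps * 2 ^ n)) with (2 ^ n) by (field; lra). lra.
Qed.

Lemma dyadic_inf (g : nat -> R) : (forall n, 0 <= g n) -> (forall n m, g n - 1 / 2 ^ n <= g m) ->
  exists l, 0 <= l /\ forall n, g n - 1 / 2 ^ n <= l <= g n.
Proof.
  intros H0 Hc. destruct (completeness (fun r => exists n, r = - g n)) as [s [Hs1 Hs2]].
  - exists 0. intros r [n ->]. specialize (H0 n). lra.
  - exists (- g 0%nat); eauto.
  - exists (- s). split; [|intros n; split].
    + assert (s <= 0); [|lra]. apply Hs2. intros r [m ->]. specialize (H0 m). lra.
    + assert (s <= - (g n - 1 / 2 ^ n)); [|lra].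
      apply Hs2. intros r [m ->]. specialize (Hc n m). lra.
    + assert (- g n <= s) by (apply Hs1; eauto). lra.
Qed.

Lemma contR_dyadic_limit {X : TopSpace} (g : nat -> X -> R) (f : X -> R) :
  (forall n x, exists W, is_open W /\ W x /\ forall y, W y -> Rabs (g n y - g n x) <= 1 / 2 ^ n) ->
  (forall n x, Rabs (f x - g n x) <= 1 / 2 ^ n) -> contR f.
Proof.
  intros Hosc Hfg x eps He. destruct (pow2_large eps He) as [n Hn].
  destruct (Hosc n x) as [W [HW [Wx HWy]]]. exists W; repeat split; auto.
  intros y Wy. specialize (HWy y Wy). pose proof (Hfg n x). pose proof (Hfg n y).
  assert (3 / 2 ^ n = 3 * (1 / 2 ^ n)) by (field; pose proof (pow2_pos n); lra).
  apply Rabs_le_bounds in HWy. apply Rabs_le_bounds in H. apply Rabs_le_bounds in H0.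
  apply Rabs_def1; lra.
Qed.

Section Dyadic_chain.
Context {X : TopSpace}.
Variables (V0 Oo : X -> Prop).

(* An interpolator: [ip (P, Q)] sits strictly between [P] and [Q] whenever this is possible,
   and is [Q] otherwise. *)
Definition interpolator (ip : (X -> Prop) * (X -> Prop) -> (X -> Prop)) :=
  forall P Q, ((is_open Q /\ forall x, top_closure P x -> Q x) ->
     is_open (ip (P, Q)) /\ (forall x, top_closure P x -> ip (P, Q) x) /\
     (forall x, top_closure (ip (P, Q)) x -> Q x))
   /\ (~ (is_open Q /\ forall x, top_closure P x -> Q x) -> ip (P, Q) = Q).

Variable ip : (X -> Prop) * (X -> Prop) -> (X -> Prop).
Hypothesis Hip : interpolator ip.

(* [chain n k] plays the role of the open set indexed by the dyadic number [k/2^n]. *)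
Fixpoint chain (n k : nat) : X -> Prop :=
  match n with
  | O => match k with O => V0 | S _ => Oo end
  | S m => if Nat.even k then chain m (Nat.div2 k)
           else ip (chain m (Nat.div2 k), chain m (S (Nat.div2 k)))
  end.

Lemma chain_S n k : chain (S n) k =
  if Nat.even k then chain n (Nat.div2 k) else ip (chain n (Nat.div2 k), chain n (S (Nat.div2 k))).
Proof. reflexivity. Qed.

Lemma chain_even n j : chain (S n) (2 * j) = chain n j.
Proof. rewrite chain_S, Nat.even_even, Nat.div2_double. reflexivity. Qed.

Lemma chain_odd n j : chain (S n) (S (2 * j)) = ip (chain n j, chain n (S j)).
Proof.
  rewrite chain_S. replace (Nat.even (S (2 * j))) with false.
  - rewrite Nat.div2_succ_double. reflexivity.
  - rewrite Nat.even_succ, Nat.odd_even. reflexivity.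
Qed.

Definition chain_inv (C : nat -> X -> Prop) (n : nat) :=
  (forall k, is_open (C k)) /\
  (forall k, (k < 2 ^ n)%nat -> forall x, top_closure (C k) x -> C (S k) x) /\
  (forall k, (2 ^ n <= k)%nat -> forall x, C k x <-> Oo x).

Hypotheses (HV0 : is_open V0) (HOo : is_open Oo) (HV0Oo : forall x, top_closure V0 x -> Oo x).

Lemma chain_invariant n : chain_inv (chain n) n.
Proof.
  induction n.
  - split; [|split].
    + intros [|k]; simpl; auto.
    + intros k Hk. simpl in Hk. assert (k = 0%nat) by lia. subst. simpl. auto.
    + intros k Hk x. simpl in Hk. destruct k; [lia|]. simpl; tauto.
  - destruct IHn as [I1 [I2 I3]].
    assert (Cond : forall j, (j < 2 ^ n)%nat -> is_open (chain n (S j)) /\ forall x, top_closure (chain n j) x -> chain n (S j) x)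
      by (intros; split; auto).
    split; [|split].
    + intros k. destruct (even_odd_cor k) as [j [->| ->]]; [rewrite chain_even; apply I1|rewrite chain_odd].
      destruct (classic (is_open (chain n (S j)) /\ forall x, top_closure (chain n j) x -> chain n (S j) x)) as [Hc|Hc].
      * apply (proj1 (Hip _ _) Hc).
      * rewrite (proj2 (Hip _ _) Hc). auto.
    + intros k Hk x Hx. simpl in Hk. destruct (even_odd_cor k) as [j [->| ->]].
      * rewrite chain_even in Hx. rewrite chain_odd. apply (proj1 (Hip _ _) (Cond j ltac:(lia))). auto.
      * rewrite chain_odd in Hx. replace (S (S (2 * j))) with (2 * S j)%nat by lia. rewrite chain_even.
        apply (proj1 (Hip _ _) (Cond j ltac:(lia))). auto.
    + intros k Hk x. simpl in Hk. destruct (even_odd_cor k) as [j [->| ->]].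
      * rewrite chain_even. apply I3. lia.
      * rewrite chain_odd.
        destruct (classic (is_open (chain n (S j)) /\ forall x, top_closure (chain n j) x -> chain n (S j) x)) as [Hc|Hc].
        -- destruct (proj1 (Hip _ _) Hc) as [_ [Ha Hb]]. split; intros Hx.
           ++ apply (I3 (S j)); [lia|]. apply Hb. apply closure_incl; auto.
           ++ apply Ha. apply closure_incl. apply (I3 j); auto. lia.
        -- rewrite (proj2 (Hip _ _) Hc). apply I3. lia.
Qed.

End Dyadic_chain.

Lemma chain_mono {X : TopSpace} (Oo : X -> Prop) (C : nat -> X -> Prop) n : chain_inv Oo C n ->
  forall k j x, (k <= j)%nat -> C k x -> C j x.
Proof.
  intros [I1 [I2 I3]] k j x Hkj Hx. induction Hkj; auto.
  destruct (lt_dec m (2 ^ n)) as [Hl|Hl].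
  - apply I2; auto. apply closure_incl; auto.
  - apply (I3 (S m)); [lia|]. apply (I3 m); auto. lia.
Qed.

Lemma interpolator_exists {X : TopSpace} : compact_space X -> hausdorff X ->
  exists ip : (X -> Prop) * (X -> Prop) -> (X -> Prop), interpolator ip.
Proof.
  intros Hc Hh.
  assert (H : forall PQ : (X -> Prop) * (X -> Prop), exists W,
    ((is_open (snd PQ) /\ forall x, top_closure (fst PQ) x -> snd PQ x) ->
      is_open W /\ (forall x, top_closure (fst PQ) x -> W x) /\ (forall x, top_closure W x -> snd PQ x))
    /\ (~ (is_open (snd PQ) /\ forall x, top_closure (fst PQ) x -> snd PQ x) -> W = snd PQ)).
  { intros [P Q]; simpl. destruct (classic (is_open Q /\ forall x, top_closure P x -> Q x)) as [Hcd|Hcd].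
    - destruct (normal_interpolate (top_closure P) Q Hc Hh (closure_closed P) (proj1 Hcd) (proj2 Hcd))
        as [W ?]. exists W; split; tauto.
    - exists Q; split; tauto. }
  destruct (choice _ H) as [ip Hip]. exists ip. intros P Q. apply (Hip (P, Q)).
Qed.

Section Levels.
Context {X : TopSpace}.
Variables (Oo : X -> Prop) (C : nat -> nat -> X -> Prop).
Hypotheses (HCinv : forall n, chain_inv Oo (C n) n) (HCeven : forall n j, C (S n) (2 * j)%nat = C n j).

(* [level n x / 2 ^ n] is the first dyadic [k / 2 ^ n] with [C n k x]; the Urysohn function is
   the limit of these. *)
Definition level n x := cnt_not (fun k => C n k x) (S (2 ^ n)).

Lemma level_le n x : (level n x <= S (2 ^ n))%nat.
Proof. apply cnt_not_le. Qed.

Lemma level_spec n x k : (k <= 2 ^ n)%nat -> (C n k x <-> (level n x <= k)%nat).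
Proof.
  intros Hk. apply (cnt_not_threshold (fun k => C n k x)); [|lia].
  intros j Hj. apply (chain_mono Oo (C n) n (HCinv n) j); auto.
Qed.

Lemma level_refine n x : (level (S n) x <= 2 * level n x <= S (level (S n) x))%nat.
Proof.
  pose proof (level_le n x) as Hn. pose proof (level_le (S n) x) as HSn. simpl in Hn, HSn. split.
  - destruct (le_lt_dec (level n x) (2 ^ n)) as [Hl|Hl]; [|lia].
    apply (level_spec (S n) x); [simpl; lia|]. rewrite HCeven. apply level_spec; auto.
  - destruct (le_lt_dec (level (S n) x) (2 ^ S n)) as [Hl|Hl]; [|simpl in Hl; lia].
    assert (H1 : C (S n) (level (S n) x) x) by (apply level_spec; auto).
    destruct (even_odd_cor (level (S n) x)) as [j [Hj|Hj]]; rewrite Hj in H1 |- *.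
    + rewrite HCeven in H1. assert (level n x <= j)%nat by (apply level_spec; auto; simpl in Hl; lia). lia.
    + assert (H2 : C (S n) (2 * S j)%nat x)
        by (apply (chain_mono Oo (C (S n)) (S n) (HCinv (S n)) (S (2 * j))); [lia| auto]).
      rewrite HCeven in H2. assert (level n x <= S j)%nat by (apply level_spec; auto; simpl in Hl; lia). lia.
Qed.

Lemma level_local n x : exists W, is_open W /\ W x /\
  forall y, W y -> (level n y <= level n x <= S (level n y))%nat.
Proof.
  destruct (HCinv n) as [I1 [I2 _]]. set (k := level n x). pose proof (level_le n x).
  exists (fun y => ((k <= 2 ^ n)%nat -> C n k y) /\ ((2 <= k)%nat -> ~ top_closure (C n (k - 2)%nat) y)).
  split; [|split].
  - apply open_inter.
    + destruct (le_lt_dec k (2 ^ n)) as [Hl|Hl].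
      * apply (is_open_ext (C n k)); auto. intros; tauto.
      * apply (is_open_ext (fun _ => True)); [intros; split; intros; [lia|auto] | apply open_full].
    + destruct (le_lt_dec 2 k) as [Hl|Hl].
      * apply (is_open_ext (fun y => ~ top_closure (C n (k - 2)%nat) y)); [intros; tauto | apply closure_closed].
      * apply (is_open_ext (fun _ => True)); [intros; split; intros; [lia|auto] | apply open_full].
  - split.
    + intros Hk. apply (level_spec n x k Hk). unfold k; lia.
    + intros Hk Hcl. assert (C n (S (k - 2)) x) by (apply I2; auto; unfold k in *; lia).
      assert (level n x <= S (k - 2))%nat by (apply level_spec; auto; unfold k in *; lia). unfold k in *; lia.
  - intros y [Hy1 Hy2]. pose proof (level_le n y). split.
    + destruct (le_lt_dec k (2 ^ n)) as [Hl|Hl]; [apply (level_spec n y k Hl); auto | lia].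
    + destruct (le_lt_dec 2 k) as [Hl|Hl]; [|lia].
      assert (~ C n (k - 2)%nat y) by (intro; apply Hy2; auto; apply closure_incl; auto).
      assert (~ (level n y <= k - 2)%nat) by (intro Hc; apply H1; apply level_spec; auto; unfold k in *; lia).
      lia.
Qed.

Definition approx n x := INR (level n x) / 2 ^ n.

Lemma approx_nonneg n x : 0 <= approx n x.
Proof. apply Rmult_le_pos; [apply pos_INR | left; apply Rinv_0_lt_compat, pow2_pos]. Qed.

Lemma approx_step n x : approx (S n) x <= approx n x <= approx (S n) x + 1 / 2 ^ (S n).
Proof.
  destruct (level_refine n x) as [Ha Hb]. apply le_INR in Ha, Hb.
  rewrite mult_INR in Ha, Hb. change (INR 2) with 2 in Ha, Hb. rewrite S_INR in Hb.
  unfold approx. pose proof (pow2_pos n). simpl pow.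
  set (a := INR (level (S n) x)) in *. set (b := INR (level n x)) in *. set (p := 2 ^ n) in *.
  assert (0 <= / p) by (left; apply Rinv_0_lt_compat; lra).
  replace (b / p) with (b * / p) by reflexivity. split.
  - replace (a / (2 * p)) with ((a / 2) * / p) by (field; lra).
    apply Rmult_le_compat_r; lra.
  - replace (a / (2 * p) + 1 / (2 * p)) with (((a + 1) / 2) * / p) by (field; lra).
    apply Rmult_le_compat_r; lra.
Qed.

Lemma approx_cauchy n m x : approx n x - 1 / 2 ^ n <= approx m x.
Proof.
  assert (Hdrift : forall n m, approx (n + m)%nat x <= approx n x /\
                     approx n x - 1 / 2 ^ n + 1 / 2 ^ (n + m) <= approx (n + m)%nat x).
  { intros n' m'. induction m'; [rewrite Nat.add_0_r; lra|].
    replace (n' + S m')%nat with (S (n' + m')) by lia. destruct (approx_step (n' + m')%nat x).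
    assert (1 / 2 ^ S (n' + m') = 1 / 2 ^ (n' + m') / 2) by (simpl; field; pose proof (pow2_pos (n' + m')); lra).
    lra. }
  destruct (le_lt_dec n m) as [Hl|Hl].
  - replace m with (n + (m - n))%nat by lia. destruct (Hdrift n (m - n)%nat).
    assert (0 < 1 / 2 ^ (n + (m - n))) by (apply Rdiv_lt_0_compat; [lra | apply pow2_pos]). lra.
  - replace n with (m + (n - m))%nat by lia. destruct (Hdrift m (n - m)%nat).
    assert (0 < 1 / 2 ^ (m + (n - m))) by (apply Rdiv_lt_0_compat; [lra | apply pow2_pos]). lra.
Qed.

Lemma approx_oscillation n x : exists W, is_open W /\ W x /\
  forall y, W y -> Rabs (approx n y - approx n x) <= 1 / 2 ^ n.
Proof.
  destruct (level_local n x) as [W [HW [Wx HWy]]]. exists W; repeat split; auto.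
  intros y Wy. destruct (HWy y Wy) as [Ha Hb]. apply le_INR in Ha, Hb. rewrite S_INR in Hb.
  unfold approx. pose proof (pow2_pos n).
  apply Rabs_le. split; apply (Rmult_le_reg_r (2 ^ n)); auto; field_simplify; lra.
Qed.

Lemma urysohn_of_chain : exists f : X -> R, contR f /\ (forall x, 0 <= f x) /\
  (forall x, C 0 0 x -> f x <= 0) /\ (forall x, ~ Oo x -> 1 <= f x).
Proof.
  assert (Hf : forall x, exists l, 0 <= l /\ forall n, approx n x - 1 / 2 ^ n <= l <= approx n x).
  { intros x. apply dyadic_inf; intros; [apply approx_nonneg | apply approx_cauchy]. }
  destruct (choice _ Hf) as [f Hfs]. exists f. split; [|split; [|split]].
  - apply (contR_dyadic_limit approx); [apply approx_oscillation|].
    intros n x. destruct (Hfs x) as [_ Hn]. specialize (Hn n). apply Rabs_le. lra.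
  - intros x. apply Hfs.
  - intros x Hx. destruct (Hfs x) as [_ Hfs0]. specialize (Hfs0 0%nat). apply (level_spec 0 x 0) in Hx; [|simpl; lia].
    unfold approx in Hfs0. replace (level 0 x) with 0%nat in Hfs0 by lia. simpl in Hfs0. lra.
  - intros x Hx. destruct (Hfs x) as [_ Hfs0]. specialize (Hfs0 0%nat). pose proof (level_le 0 x).
    assert (~ (level 0 x <= 1)%nat).
    { intros Hl. apply Hx. destruct (HCinv 0) as [_ [_ I3]]. apply (I3 1%nat); [simpl; lia|].
      apply level_spec; auto. }
    unfold approx in Hfs0. simpl in *. replace (level 0 x) with 2%nat in Hfs0 by lia. simpl in Hfs0. lra.
Qed.

End Levels.

Lemma urysohn {X : TopSpace} (A Oo : X -> Prop) : compact_space X -> hausdorff X ->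
  closed A -> is_open Oo -> (forall x, A x -> Oo x) ->
  exists f : X -> R, contR f /\ (forall x, 0 <= f x <= 1) /\
    (forall x, A x -> f x = 1) /\ (forall x, ~ Oo x -> f x = 0).
Proof.
  intros Hc Hh HA HO HAO.
  destruct (normal_interpolate A Oo Hc Hh HA HO HAO) as [V0 [HV0 [HAV0 HV0O]]].
  destruct (interpolator_exists Hc Hh) as [ip Hip].
  destruct (urysohn_of_chain Oo (chain V0 Oo ip)) as [f [Hfc [Hf0 [HfV0 HfO]]]].
  - apply chain_invariant; auto.
  - apply chain_even.
  - exists (fun x => 1 - Rmin (f x) 1). split; [|split; [|split]].
    + apply contR_minus; [apply contR_const | apply contR_min_const; auto].
    + intros x. specialize (Hf0 x). unfold Rmin; destruct (Rle_dec (f x) 1); lra.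
    + intros x Ax. specialize (HfV0 x (HAV0 x Ax)). specialize (Hf0 x).
      unfold Rmin; destruct (Rle_dec (f x) 1); lra.
    + intros x Ox. specialize (HfO x Ox). unfold Rmin; destruct (Rle_dec (f x) 1); lra.
Qed.

Section Bumps.
Context {X : TopSpace}.
Hypotheses (HXc : compact_space X) (HXh : hausdorff X).

Lemma bump (x : X) (V : X -> Prop) : is_open V -> V x ->
  exists b : X -> R, contR b /\ (forall z, 0 <= b z <= 1) /\ b x = 1 /\ (forall z, ~ V z -> b z = 0).
Proof.
  intros HV Vx. destruct (urysohn (fun z => z = x) V HXc HXh (closed_point x HXh) HV) as [f [? [? [? ?]]]].
  - intros; subst; auto.
  - exists f; repeat split; auto; apply H0.
Qed.

Lemma urysohn_support (A U : X -> Prop) : closed A -> is_open U -> (forall x, A x -> U x) ->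
  exists f : X -> R, contR f /\ (forall x, 0 <= f x <= 1) /\ (forall x, A x -> f x = 1) /\
    (forall x, top_closure (fun z => f z <> 0) x -> U x).
Proof.
  intros HA HU HAU. destruct (normal_interpolate A U HXc HXh HA HU HAU) as [W [HW [HAW HWU]]].
  destruct (urysohn A W HXc HXh HA HW HAW) as [f [? [? [? Hf0]]]].
  exists f; split; [auto | split; [auto | split; [auto |]]]. intros y Hy. apply HWU.
  apply (closure_mono (fun z => f z <> 0)); auto.
  intros z Hz. apply NNPP. intros HWz. apply Hz; auto.
Qed.

Lemma bumps_family (l : list X) :
  exists E : X -> X -> R, (forall x, In x l -> contR (E x) /\ (forall z, 0 <= E x z <= 1) /\ E x x = 1) /\
    (forall x x' z, In x l -> In x' l -> E x z <> 0 -> E x' z <> 0 -> x = x') /\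
    (forall x z, In x l -> In z l -> z <> x -> E x z = 0).
Proof.
  destruct (hausdorff_disjoint_nbhds l HXh) as [V [HV1 HV2]].
  assert (H : forall x, exists e : X -> R, In x l ->
    contR e /\ (forall z, 0 <= e z <= 1) /\ e x = 1 /\ forall z, ~ V x z -> e z = 0).
  { intros x. destruct (classic (In x l)) as [Hx|Hx].
    - destruct (HV1 x Hx) as [Ho Hxx]. destruct (bump x (V x) Ho Hxx) as [e ?]. exists e; auto.
    - exists (fun _ => 0); intros; contradiction. }
  destruct (choice _ H) as [E HE].
  assert (HEV : forall x z, In x l -> E x z <> 0 -> V x z).
  { intros x z Hx Hz. apply NNPP. intros Hn. apply Hz. apply (HE x Hx); auto. }
  exists E. split; [|split].
  - intros x Hx. destruct (HE x Hx) as [? [? [? ?]]]; auto.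
  - intros x x' z Hx Hx' H1 H2. apply (HV2 x x' z); auto.
  - intros x z Hx Hz Hzx. apply NNPP. intros E'. apply Hzx.
    apply (HV2 z x z); auto. apply HV1; auto.
Qed.

Section Shrinking.
Variables (n : nat) (U : nat -> X -> Prop).
Hypotheses (HU : forall i, (i < n)%nat -> is_open (U i)) (Hcov : forall x, exists i, (i < n)%nat /\ U i x).

Lemma shrink_cover_prefix k : (k <= n)%nat -> exists W : nat -> X -> Prop,
  (forall i, (i < k)%nat -> is_open (W i) /\ forall x, top_closure (W i) x -> U i x) /\
  (forall x, exists i, (i < n)%nat /\ ((i < k)%nat -> W i x) /\ ((k <= i)%nat -> U i x)).
Proof.
  induction k; intros Hk.
  - exists U; split; [intros; lia|].
    intros x; destruct (Hcov x) as [i [? ?]]; exists i; repeat split; auto; lia.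
  - destruct IHk as [W [HW1 HW2]]; [lia|].
    set (S := fun i x => ((i < k)%nat -> W i x) /\ ((k <= i)%nat -> U i x)).
    assert (HSo : forall i, (i < n)%nat -> is_open (S i)).
    { intros i Hi. unfold S. destruct (lt_dec i k) as [Hl|Hl].
      - apply (is_open_ext (W i)); [intros; split; [intros; split; auto; lia | intros [? ?]; auto] | apply HW1; auto].
      - apply (is_open_ext (U i)); [intros; split; [intros; split; auto; lia | intros [? ?]; apply H0; lia] | apply HU; auto]. }
    (* the points covered by no other member; the [k]-th member is shrunk around them *)
    set (A := fun x => forall i, (i < n)%nat -> i <> k -> ~ S i x).
    assert (HA : closed A).
    { apply (is_open_ext (fun x => exists i, ((i < n)%nat /\ i <> k) /\ S i x)).
      - intros x; unfold A; split; [intros [i [[? ?] ?]] Hn; apply (Hn i); auto|].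
        intros Hn. apply not_all_ex_not in Hn. destruct Hn as [i Hn]. exists i.
        destruct (classic (i < n)%nat); [|tauto]. destruct (classic (i = k)); [tauto|].
        split; auto. apply NNPP. tauto.
      - apply open_indexed_union. intros i [? ?]; auto. }
    assert (HAU : forall x, A x -> U k x).
    { intros x Ax. destruct (HW2 x) as [i [Hi [Ha Hb]]]. destruct (Nat.eq_dec i k) as [->|Hne]; [apply Hb; lia|].
      exfalso. apply (Ax i Hi Hne). split; auto. }
    destruct (normal_interpolate A (U k) HXc HXh HA (HU k ltac:(lia)) HAU) as [W' [HW' [HAW' HW'U]]].
    exists (fun i => if Nat.eq_dec i k then W' else W i). split.
    + intros i Hi. destruct (Nat.eq_dec i k) as [->|Hne]; auto. apply HW1; lia.
    + intros x. destruct (classic (A x)) as [Ax|Ax].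
      * exists k. repeat split; [lia| |intros; lia]. intros _. destruct (Nat.eq_dec k k); [auto|congruence].
      * unfold A in Ax. apply not_all_ex_not in Ax. destruct Ax as [i Ax].
        assert (i < n)%nat by (apply NNPP; tauto). assert (i <> k) by (apply NNPP; tauto).
        assert (S i x) by (apply NNPP; tauto).
        exists i. destruct H1 as [Ha Hb]. repeat split; auto.
        -- intros Hi. destruct (Nat.eq_dec i k); [congruence|]. apply Ha; lia.
        -- intros Hi. apply Hb; lia.
Qed.

Lemma shrink_cover : exists W : nat -> X -> Prop,
  (forall i, (i < n)%nat -> is_open (W i) /\ forall x, top_closure (W i) x -> U i x) /\
  (forall x, exists i, (i < n)%nat /\ W i x).
Proof.
  destruct (shrink_cover_prefix n (le_n n)) as [W [HW1 HW2]]. exists W; split; auto.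
  intros x. destruct (HW2 x) as [i [Hi [Hw _]]]. exists i; auto.
Qed.

End Shrinking.

Lemma partition_of_unity_exists (n : nat) (U : nat -> X -> Prop) :
  (forall i, (i < n)%nat -> is_open (U i)) -> (forall x, exists i, (i < n)%nat /\ U i x) ->
  exists v, partition_of_unity_subordinate n U v.
Proof.
  intros HU Hcov. destruct (shrink_cover n U HU Hcov) as [W [HW1 HW2]].
  assert (Hf : forall i, exists f : X -> R, (i < n)%nat -> contR f /\ (forall x, 0 <= f x <= 1) /\
    (forall x, top_closure (W i) x -> f x = 1) /\ (forall x, top_closure (fun z => f z <> 0) x -> U i x)).
  { intros i. destruct (lt_dec i n) as [Hi|Hi].
    - destruct (urysohn_support (top_closure (W i)) (U i) (closure_closed _) (HU i Hi) (proj2 (HW1 i Hi)))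
        as [f Hf]. exists f; auto.
    - exists (fun _ => 0); intros; lia. }
  destruct (choice _ Hf) as [f Hfs].
  set (S := fun x => Rsum n (fun i => f i x)).
  assert (Hle : forall i x, (i < n)%nat -> f i x <= S x)
    by (intros i x Hi; apply (Rsum_ge_elem n (fun i => f i x)); auto; intros j Hj; apply (Hfs j Hj)).
  assert (HS1 : forall x, 1 <= S x).
  { intros x. destruct (HW2 x) as [i [Hi Hx]].
    rewrite <- (proj1 (proj2 (proj2 (Hfs i Hi))) x (closure_incl _ _ Hx)). auto. }
  exists (fun i x => f i x / S x). split.
  - intros i Hi. destruct (Hfs i Hi) as [Hc1 [Hc2 [_ Hc4]]]. split; [|split].
    + apply contR_div; auto; [apply contR_Rsum; intros; apply Hfs; auto|]. intros x; specialize (HS1 x); lra.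
    + intros x. specialize (HS1 x). specialize (Hle i x Hi). specialize (Hc2 x). split.
      * apply Rmult_le_pos; [lra | left; apply Rinv_0_lt_compat; lra].
      * apply (Rmult_le_reg_r (S x)); [lra|]. unfold Rdiv. rewrite Rmult_assoc, Rinv_l; lra.
    + intros x Hx. apply Hc4. apply (closure_mono (fun z => f i z / S z <> 0)); auto.
      intros z Hz Hf0. apply Hz. rewrite Hf0. unfold Rdiv; ring.
  - intros x. unfold Rdiv. rewrite (Rsum_ext n _ (fun i => / S x * f i x)) by (intros; ring).
    rewrite Rsum_scal. fold (S x). specialize (HS1 x). field. lra.
Qed.

End Bumps.

(** * Transfer operators *)

Definition RtoC_fun {X : Type} (g : X -> R) : X -> Cplx := fun x => RtoC (g x).
Arguments RtoC_fun : simpl never.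

Lemma L_ext {X : Type} (L : (X -> Cplx) -> (X -> Cplx)) (a b : X -> Cplx) y :
  (forall x, a x = b x) -> L a y = L b y.
Proof. intros H. replace b with a; auto. apply functional_extensionality; auto. Qed.

Section Transfer_operator.
Context {X : TopSpace}.
Variables (phi : X -> X) (L : (X -> Cplx) -> (X -> Cplx)).
Hypothesis HT : is_transfer_operator phi L.

Lemma L_cont a : contC a -> contC (L a).
Proof. apply HT. Qed.
Lemma L_add a b y : contC a -> contC b -> L (fun x => Cadd (a x) (b x)) y = Cadd (L a y) (L b y).
Proof. intros; apply HT; auto. Qed.
Lemma L_scal (c : Cplx) a y : contC a -> L (fun x => Cmul c (a x)) y = Cmul c (L a y).
Proof. intros; apply HT; auto. Qed.
Lemma L_pos a y : contC a -> (forall x, Cnonneg (a x)) -> Cnonneg (L a y).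
Proof. intros; apply HT; auto. Qed.
Lemma L_one y : L (fun _ => Defs.C1) y = Defs.C1.
Proof. apply HT. Qed.
Lemma L_module a b y : contC a -> contC b ->
  L (fun x => Cmul (a (phi x)) (b x)) y = Cmul (a y) (L b y).
Proof. intros; apply HT; auto. Qed.

Lemma L_zero y : L (fun _ => Defs.C0) y = Defs.C0.
Proof.
  rewrite (L_ext L _ (fun x => Cmul Defs.C0 Defs.C1)) by (intros; Cring).
  rewrite L_scal by apply contC_const. Cring.
Qed.

Lemma L_opp a y : contC a -> L (fun x => Copp (a x)) y = Copp (L a y).
Proof.
  intros. rewrite (L_ext L _ (fun x => Cmul (RtoC (-1)) (a x))) by (intros; Cring).
  rewrite L_scal; auto. Cring.
Qed.

Lemma L_sub a b y : contC a -> contC b ->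
  L (fun x => Cadd (a x) (Copp (b x))) y = Cadd (L a y) (Copp (L b y)).
Proof. intros. rewrite L_add, L_opp; auto. apply contC_opp; auto. Qed.

Lemma L_Csum_list {T} (l : list T) (f : T -> X -> Cplx) y : (forall i, In i l -> contC (f i)) ->
  L (fun x => Csum_list l (fun i => f i x)) y = Csum_list l (fun i => L (f i) y).
Proof.
  induction l; simpl; intros H; [apply L_zero|].
  rewrite (L_add (f a) (fun x => Csum_list l (fun i => f i x))), IHl; auto.
  apply contC_Csum_list; auto.
Qed.

Lemma L_real_nonneg (g : X -> R) y : contR g -> (forall x, 0 <= g x) ->
  snd (L (RtoC_fun g) y) = 0 /\ 0 <= fst (L (RtoC_fun g) y).
Proof.
  intros Hg Hp. apply L_pos; [apply contC_RtoC; auto|].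
  intros x; split; unfold RtoC_fun; simpl; auto.
Qed.

(* Positivity forces [L] to preserve real functions: split [g] into positive and negative parts. *)
Lemma L_real (g : X -> R) y : contR g -> snd (L (RtoC_fun g) y) = 0.
Proof.
  intros Hg.
  assert (Hp : contR (fun x => Rmax (g x) 0)) by (apply contR_max_0; auto).
  assert (Hn : contR (fun x => Rmax (- g x) 0)) by (apply contR_max_0, contR_opp; auto).
  rewrite (L_ext L _ (fun x => Cadd (RtoC_fun (fun x => Rmax (g x) 0) x) (Copp (RtoC_fun (fun x => Rmax (- g x) 0) x)))).
  - rewrite L_sub; try apply contC_RtoC; auto. simpl.
    rewrite (proj1 (L_real_nonneg _ y Hp (fun x => Rmax_r _ _))), (proj1 (L_real_nonneg _ y Hn (fun x => Rmax_r _ _))).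
    ring.
  - intros x. unfold RtoC_fun. apply Cplx_eq; simpl; [|ring].
    unfold Rmax; destruct (Rle_dec (g x) 0), (Rle_dec (- g x) 0); lra.
Qed.

Lemma L_mono (g h : X -> R) y : contR g -> contR h -> (forall x, g x <= h x) ->
  fst (L (RtoC_fun g) y) <= fst (L (RtoC_fun h) y).
Proof.
  intros Hg Hh Hgh. assert (Hd : contR (fun x => h x - g x)) by (apply contR_minus; auto).
  destruct (L_real_nonneg _ y Hd) as [_ H]; [intros x; specialize (Hgh x); lra|].
  rewrite (L_ext L _ (fun x => Cadd (RtoC_fun h x) (Copp (RtoC_fun g x)))) in H
    by (intros x; unfold RtoC_fun; apply Cplx_eq; simpl; ring).
  rewrite L_sub in H; try apply contC_RtoC; auto. simpl in H. lra.
Qed.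

Lemma L_scal_real (c : R) (g : X -> R) y : contR g ->
  fst (L (RtoC_fun (fun x => c * g x)) y) = c * fst (L (RtoC_fun g) y).
Proof.
  intros Hg. rewrite (L_ext L _ (fun x => Cmul (RtoC c) (RtoC_fun g x)))
    by (intros x; unfold RtoC_fun; apply Cplx_eq; simpl; ring).
  rewrite L_scal by (apply contC_RtoC; auto). simpl. rewrite (L_real g y Hg). ring.
Qed.

Lemma L_one_real y : fst (L (RtoC_fun (fun _ => 1)) y) = 1.
Proof. rewrite (L_ext L _ (fun _ => Defs.C1)) by reflexivity. rewrite L_one; reflexivity. Qed.

Lemma L_abs_bound (g b : X -> R) (M : R) y : contR g -> contR b ->
  (forall x, Rabs (g x) <= M * b x) -> Rabs (fst (L (RtoC_fun g) y)) <= M * fst (L (RtoC_fun b) y).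
Proof.
  intros Hg Hb Hgb. assert (HMb : contR (fun x => M * b x)) by (apply contR_scal; auto).
  assert (H1 := L_mono g (fun x => M * b x) y Hg HMb).
  assert (H2 := L_mono (fun x => - (M * b x)) g y (contR_opp _ HMb) Hg).
  rewrite L_scal_real in H1 by auto.
  rewrite (L_ext L (RtoC_fun (fun x => - (M * b x))) (fun x => Copp (RtoC_fun (fun x => M * b x) x))) in H2
    by (intros x; unfold RtoC_fun; apply Cplx_eq; simpl; ring).
  rewrite L_opp in H2 by (apply contC_RtoC; auto). simpl in H2. rewrite L_scal_real in H2 by auto.
  apply Rabs_le. split; [apply H2 | apply H1]; intros x; pose proof (Rabs_le_bounds _ _ (Hgb x)); lra.
Qed.

Lemma L_re_im a y : contC a ->
  L a y = (fst (L (RtoC_fun (fun x => fst (a x))) y), fst (L (RtoC_fun (fun x => snd (a x))) y)).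
Proof.
  intros Ha.
  assert (Hre : contR (fun x => fst (a x))) by (apply contC_fst; auto).
  assert (Him : contR (fun x => snd (a x))) by (apply contC_snd; auto).
  rewrite (L_ext L a (fun x => Cadd (RtoC_fun (fun x => fst (a x)) x)
                                    (Cmul (0, 1) (RtoC_fun (fun x => snd (a x)) x))))
    by (intros x; unfold RtoC_fun; apply Cplx_eq; simpl; ring).
  rewrite L_add, L_scal; try apply contC_RtoC; auto.
  - apply Cplx_eq; simpl; rewrite !L_real by auto; ring.
  - apply contC_mul; [apply contC_const | apply contC_RtoC; auto].
Qed.

Lemma L_Rsum_list {T} (l : list T) (E : T -> X -> R) y : (forall x, In x l -> contR (E x)) ->
  fst (L (RtoC_fun (fun z => Rsum_list l (fun x => E x z))) y) = Rsum_list l (fun x => fst (L (RtoC_fun (E x)) y)).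
Proof.
  intros HE. rewrite (L_ext L _ (fun z => Csum_list l (fun x => RtoC_fun (E x) z))).
  - rewrite L_Csum_list, fst_Csum_list; auto. intros; apply contC_RtoC; auto.
  - intros z. unfold RtoC_fun. apply Cplx_eq; simpl.
    + rewrite fst_Csum_list; auto.
    + rewrite snd_Csum_list, Rsum_list_zero; auto.
Qed.

(** ** Locality: [L a y] only depends on [a] on the fibre over [y] *)

Hypotheses (HXc : compact_space X) (HXh : hausdorff X) (Hphic : top_continuous phi).

(* Cut [g] by a bump [b] at [y] vanishing on the compact image of [{|g| >= eps}]:
   [L (g (1 - b o phi)) y = (1 - b y) L g y = 0] and [|L (g (b o phi)) y| <= eps]. *)
Lemma L_locality_eps (g : X -> R) y eps : contR g -> (forall x, phi x = y -> g x = 0) -> 0 < eps ->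
  Rabs (fst (L (RtoC_fun g) y)) <= eps.
Proof.
  intros Hg Hg0 He. set (K := fun x => eps <= Rabs (g x)).
  assert (HK : closed K).
  { apply open_of_local_nbhds. intros x Hx. unfold K in Hx.
    destruct (Hg x (eps - Rabs (g x))) as [U [HU [Ux HUy]]]; [lra|].
    exists U; repeat split; auto. intros z Hz Hk. specialize (HUy z Hz). unfold K in Hk.
    pose proof (Rabs_triang_inv (g z) (g x)). lra. }
  assert (HiK : compact_set (img phi K)) by (apply compact_image, closed_compact; auto).
  assert (Hy : ~ img phi K y).
  { intros [x [Kx Ex]]. unfold K in Kx. rewrite Hg0, Rabs_R0 in Kx; auto. lra. }
  destruct (hausdorff_sep_point_compact (img phi K) y HXh HiK Hy) as [U [V [HU [HV [Uy [HKV Hd]]]]]].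
  destruct (bump HXc HXh y U HU Uy) as [b [Hbc [Hb01 [Hby Hb0]]]].
  assert (Hbk : forall x, K x -> b (phi x) = 0).
  { intros x Kx. apply Hb0. intros Ux. apply (Hd (phi x)); split; auto. apply HKV. exists x; auto. }
  assert (Hbp : contR (fun x => b (phi x))) by (apply contR_compose_cont; auto).
  assert (H1c : contR (fun x => b (phi x) * g x)) by (apply contR_mult; auto).
  assert (H1mb : contR (fun z => 1 - b z)) by (apply contR_minus; auto; apply contR_const).
  assert (H2c : contR (fun x => (1 - b (phi x)) * g x))
    by (apply contR_mult; auto; apply (contR_compose_cont phi (fun z => 1 - b z)); auto).
  rewrite (L_ext L (RtoC_fun g) (fun x => Cadd (RtoC_fun (fun x => b (phi x) * g x) x)
                                                (RtoC_fun (fun x => (1 - b (phi x)) * g x) x)))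
    by (intros x; unfold RtoC_fun; apply Cplx_eq; simpl; ring).
  rewrite L_add by (apply contC_RtoC; auto). simpl.
  assert (E2 : fst (L (RtoC_fun (fun x => (1 - b (phi x)) * g x)) y) = 0).
  { rewrite (L_ext L _ (fun x => Cmul (RtoC_fun (fun z => 1 - b z) (phi x)) (RtoC_fun g x)))
      by (intros x; unfold RtoC_fun; apply Cplx_eq; simpl; ring).
    rewrite L_module by (apply contC_RtoC; auto). unfold RtoC_fun at 1; simpl. rewrite Hby. ring. }
  rewrite E2, Rplus_0_r.
  assert (E1 := L_abs_bound (fun x => b (phi x) * g x) (fun _ => 1) eps y H1c (contR_const 1)).
  rewrite L_one_real, Rmult_1_r in E1. apply E1. intros x.
  destruct (classic (K x)) as [Kx|Kx]; [rewrite Hbk; auto; rewrite Rmult_0_l, Rabs_R0; lra|].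
  unfold K in Kx. rewrite Rabs_mult. specialize (Hb01 (phi x)).
  rewrite (Rabs_pos_eq (b (phi x))) by lra. pose proof (Rabs_pos (g x)). nra.
Qed.

Lemma L_locality_real (g : X -> R) y : contR g -> (forall x, phi x = y -> g x = 0) ->
  fst (L (RtoC_fun g) y) = 0.
Proof.
  intros Hg Hg0. destruct (Req_dec (fst (L (RtoC_fun g) y)) 0) as [?|Hne]; auto. exfalso.
  pose proof (Rabs_pos_lt _ Hne).
  pose proof (L_locality_eps g y (Rabs (fst (L (RtoC_fun g) y)) / 2) Hg Hg0 ltac:(lra)). lra.
Qed.

Lemma L_locality a y : contC a -> (forall x, phi x = y -> a x = Defs.C0) -> L a y = Defs.C0.
Proof.
  intros Ha Ha0. rewrite (L_re_im a y Ha).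
  rewrite (L_locality_real (fun x => fst (a x))), (L_locality_real (fun x => snd (a x))).
  - reflexivity.
  - apply contC_snd; auto.
  - intros x Hx; rewrite Ha0; auto.
  - apply contC_fst; auto.
  - intros x Hx; rewrite Ha0; auto.
Qed.

(* The weight of [x] is [L] applied to a bump at [x]; locality does the rest. *)
Lemma L_on_finite_fibre y l : NoDup l -> (forall x, In x l <-> phi x = y) ->
  exists (w : X -> R) (E : X -> X -> R),
    (forall x, In x l -> contR (E x) /\ E x x = 1 /\ forall z, In z l -> z <> x -> E x z = 0) /\
    (forall a, contC a -> L a y = Csum_list l (fun x => Cmul (RtoC (w x)) (a x))).
Proof.
  intros Hnd Hl. destruct (bumps_family HXc HXh l) as [E [HE1 [_ HE3]]].
  exists (fun x => fst (L (RtoC_fun (E x)) y)), E. split.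
  - intros x Hx. destruct (HE1 x Hx) as [? [? ?]]. split; [auto | split; [auto | intros; apply HE3; auto]].
  - intros a Ha. set (s := fun z => Csum_list l (fun x => Cmul (a x) (RtoC_fun (E x) z))).
    assert (HEc : forall x, In x l -> contC (fun z => Cmul (a x) (RtoC_fun (E x) z)))
      by (intros x Hx; apply contC_mul; [apply contC_const | apply contC_RtoC; apply HE1; auto]).
    assert (Hs : contC s) by (apply contC_Csum_list; auto).
    assert (H0 : L (fun z => Cadd (a z) (Copp (s z))) y = Defs.C0).
    { apply L_locality; [apply contC_add; auto; apply contC_opp; auto|].
      intros z Hz. apply Hl in Hz. unfold s. rewrite (Csum_list_single l _ z Hnd Hz).
      - destruct (HE1 z Hz) as [_ [_ Hzz]]. unfold RtoC_fun; rewrite Hzz. Cring.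
      - intros x Hx Hxz. unfold RtoC_fun; rewrite HE3; auto. Cring. }
    rewrite L_sub in H0 by auto.
    assert (Las : L a y = L s y).
    { assert (F1 := f_equal fst H0). assert (F2 := f_equal snd H0). Csimpl. apply Cplx_eq; lra. }
    rewrite Las. unfold s. rewrite L_Csum_list by auto.
    apply Csum_list_ext. intros x Hx. rewrite L_scal by (apply contC_RtoC; apply HE1; auto).
    apply Cplx_eq; simpl; rewrite L_real by (apply HE1; auto); ring.
Qed.

End Transfer_operator.

(** * Transfer operators given by fibre sums *)

Section Fibre_sum.
Context {X : TopSpace}.
Variables (phi : X -> X) (L : (X -> Cplx) -> (X -> Cplx)) (rho : X -> R).
Hypothesis HF : fibre_rep phi L rho.

Lemma fibre_sum_real (b : X -> R) y l :
  (forall a, contC a -> L a y = Csum_list l (fun x => Cmul (RtoC (rho x)) (a x))) -> contR b ->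
  fst (L (RtoC_fun b) y) = Rsum_list l (fun z => rho z * b z).
Proof.
  intros HL Hb. rewrite HL by (apply contC_RtoC; auto). rewrite fst_Csum_list.
  apply Rsum_list_ext. intros; unfold RtoC_fun; simpl; ring.
Qed.

Lemma quasi_basis_of_fibre_sum n U v : open_cover_homeo phi n U -> partition_of_unity_subordinate n U v ->
  is_quasi_basis phi L n (fun i x => RtoC (sqrt (v i x / rho x))).
Proof.
  destruct HF as [Hrc [Hrp Hfib]]. intros [HU _] [Hv Hsum].
  assert (Hq : forall i x, (i < n)%nat -> 0 <= v i x / rho x).
  { intros i x Hi. destruct (Hv i Hi) as [_ [Hb _]]. specialize (Hrp x). specialize (Hb x).
    apply Rmult_le_pos; [lra | left; apply Rinv_0_lt_compat; lra]. }
  assert (Hqc : forall i, (i < n)%nat -> contR (fun x => sqrt (v i x / rho x))).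
  { intros i Hi. apply contR_sqrt; [|intros; apply Hq; auto].
    apply contR_div; [apply Hv; auto | auto | intros x; specialize (Hrp x); lra]. }
  assert (Hu0 : forall i x, v i x = 0 -> sqrt (v i x / rho x) = 0).
  { intros i x E. rewrite E. unfold Rdiv; rewrite Rmult_0_l. apply sqrt_0. }
  split; [intros i Hi; apply contC_RtoC; auto|].
  intros a Ha x. unfold alpha_of. destruct (Hfib (phi x)) as [l [Hnd [Hl [_ HL]]]].
  assert (Hxl : In x l) by (apply Hl; auto).
  rewrite (Csum_ext n _ (fun i => Cmul (RtoC (v i x)) (a x))); [rewrite Csum_RtoC_mul, Hsum; Cring|].
  intros i Hi. destruct (Hv i Hi) as [_ [_ Hsupp]].
  rewrite HL by (apply contC_mul; auto; apply contC_conj, contC_RtoC; auto).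
  destruct (Req_dec (v i x) 0) as [E|E]; [rewrite Hu0, E; auto; Cring|].
  (* only [x] itself contributes: [v i] is supported in [U i], on which [phi] is injective *)
  rewrite (Csum_list_single l _ x Hnd Hxl).
  - pose proof (sqrt_sqrt _ (Hq i x Hi)). pose proof (Hrp x).
    set (s := sqrt (v i x / rho x)) in *.
    assert (Hv' : v i x = s * s * rho x) by (rewrite H; field; lra).
    rewrite Hv'. Cring.
  - intros z Hz Hzx. assert (v i z = 0).
    { apply NNPP. intros Ez. apply Hzx. destruct (HU i Hi) as [_ [Hinj _]].
      apply Hinj; [apply Hsupp, closure_incl; auto | apply Hsupp, closure_incl; auto | apply Hl; auto]. }
    rewrite Hu0; auto. Cring.
Qed.

Hypotheses (HT : is_transfer_operator phi L) (HXc : compact_space X) (HXh : hausdorff X).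

Lemma open_avoid_list (l : list X) (x : X) : is_open (fun w => forall z, In z l -> z <> x -> w <> z).
Proof. apply open_list_inter. intros z _ _. apply (closed_point z HXh). Qed.

(* [L b] for a bump [b] at [x] is continuous and positive near [phi x], so nearby fibres meet [supp b]. *)
Lemma fibre_sum_open_map V : is_open V -> is_open (img phi V).
Proof.
  destruct HF as [Hrc [Hrp Hfib]]. intros HV0. apply open_of_local_nbhds. intros y0 [x0 [Vx0 <-]].
  destruct (Hfib (phi x0)) as [l [Hnd [Hl [_ HL]]]].
  set (W := fun w => V w /\ forall z, In z l -> z <> x0 -> w <> z).
  assert (HW : is_open W) by (apply open_inter; auto; apply open_avoid_list).
  destruct (bump HXc HXh x0 W HW) as [b [Hbc [Hb01 [Hbx Hb0]]]].
  { split; [auto | intros z _ Hz E; subst; auto]. }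
  set (F := fun y => fst (L (RtoC_fun b) y)).
  assert (HFc : contR F) by (apply contC_fst, (L_cont phi L HT), contC_RtoC; auto).
  assert (HFx : F (phi x0) = rho x0).
  { unfold F. rewrite (fibre_sum_real b (phi x0) l HL Hbc), (Rsum_list_single l _ x0 Hnd).
    - rewrite Hbx; ring.
    - apply Hl; auto.
    - intros z Hz Hzx. rewrite Hb0; [ring|]. intros [_ Hv]. apply (Hv z Hz Hzx); auto. }
  destruct (HFc (phi x0) (rho x0 / 2)) as [N [HN [HNx HNy]]]; [specialize (Hrp x0); lra|].
  exists N; repeat split; auto. intros y' Hy'. specialize (HNy y' Hy').
  destruct (Hfib y') as [l' [_ [Hl' [_ HL']]]].
  assert (Fy : F y' = Rsum_list l' (fun z => rho z * b z)) by (apply fibre_sum_real; auto).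
  destruct (classic (exists z, In z l' /\ b z <> 0)) as [[z [Hz Hbz]]|Hn].
  - exists z. split; [|apply Hl'; auto]. apply NNPP. intros Vz. apply Hbz, Hb0. intros [? _]; auto.
  - exfalso. rewrite Rsum_list_zero in Fy.
    + rewrite HFx, Fy in HNy. specialize (Hrp x0). apply Rabs_def2 in HNy. lra.
    + intros z Hz. destruct (Req_dec (b z) 0) as [E|E]; [rewrite E; ring|]. exfalso; apply Hn; eauto.
Qed.

(* With a bump [b] at [x], two distinct points of one fibre near [x] would make
   [L b] at least about [2 rho x], while it is close to [rho x] near [phi x]. *)
Lemma fibre_sum_locally_injective (Hphic : top_continuous phi) x : exists U, is_open U /\ U x /\
  forall x1 x2, U x1 -> U x2 -> phi x1 = phi x2 -> x1 = x2.
Proof.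
  destruct HF as [Hrc [Hrp Hfib]].
  destruct (Hfib (phi x)) as [l [Hnd [Hl [_ HL]]]].
  destruct (bump HXc HXh x _ (open_avoid_list l x)) as [b [Hbc [Hb01 [Hbx Hb0]]]].
  { intros z _ Hz E; subst; auto. }
  set (F := fun y => fst (L (RtoC_fun b) y)). set (c := rho x).
  assert (Hcp : 0 < c) by apply Hrp.
  assert (HFc : contR F) by (apply contC_fst, (L_cont phi L HT), contC_RtoC; auto).
  assert (HFx : F (phi x) = c).
  { unfold F. rewrite (fibre_sum_real b (phi x) l HL Hbc), (Rsum_list_single l _ x Hnd).
    - rewrite Hbx; unfold c; ring.
    - apply Hl; auto.
    - intros z Hz Hzx. rewrite Hb0; [ring|]. intros Hv. apply (Hv z Hz Hzx); auto. }
  assert (Hrb : contR (fun z => rho z * b z)) by (apply contR_mult; auto).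
  destruct (Hrb x (c / 3)) as [O1 [HO1 [HO1x HO1y]]]; [lra|].
  destruct (HFc (phi x) (c / 3)) as [N [HN [HNx HNy]]]; [lra|].
  exists (fun z => O1 z /\ N (phi z)). split; [apply open_inter; auto; apply Hphic; auto|]. split; [auto|].
  intros x1 x2 [H1 H1'] [H2 H2'] E. apply NNPP. intros Hne.
  destruct (Hfib (phi x1)) as [l' [Hnd' [Hl' [_ HL']]]].
  assert (Fy : F (phi x1) = Rsum_list l' (fun z => rho z * b z)) by (apply fibre_sum_real; auto).
  assert (Hnn : forall i, In i l' -> 0 <= rho i * b i)
    by (intros i _; specialize (Hrp i); specialize (Hb01 i); nra).
  assert (Hge := Rsum_list_ge_two l' (fun z => rho z * b z) x1 x2 Hnd' Hnn
                   (proj2 (Hl' x1) eq_refl) (proj2 (Hl' x2) (eq_sym E)) Hne).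
  assert (A1 := HO1y x1 H1). assert (A2 := HO1y x2 H2). rewrite Hbx in A1, A2.
  specialize (HNy (phi x1) H1'). rewrite HFx, Fy in HNy.
  apply Rabs_def2 in A1. apply Rabs_def2 in A2. apply Rabs_def2 in HNy. unfold c in *. lra.
Qed.

Lemma local_homeo_of_fibre_sum : top_continuous phi -> local_homeo phi.
Proof.
  intros Hphic. split; auto. intros x.
  destruct (fibre_sum_locally_injective Hphic x) as [U [HU [Ux Hinj]]].
  exists U. repeat split; auto.
  - apply fibre_sum_open_map; auto.
  - intros V HV. exists (img phi (fun x => U x /\ V x)). split.
    + apply fibre_sum_open_map, open_inter; auto.
    + intros y; split; [intros H; split; auto; destruct H as [z [[? ?] ?]]; exists z; auto | tauto].
Qed.

End Fibre_sum.

(** * Transfer operators of finite type are fibre sums *)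

Lemma contC_family_bounded {X : TopSpace} (N : nat) (u : nat -> X -> Cplx) : compact_space X ->
  (forall i, (i < N)%nat -> contC (u i)) ->
  exists M, 0 <= M /\ forall i x, (i < N)%nat -> Rabs (fst (u i x)) <= M /\ Rabs (snd (u i x)) <= M.
Proof.
  intros Hc Hu. set (S := fun x => Rsum N (fun i => Rabs (fst (u i x)) + Rabs (snd (u i x)))).
  assert (HS : contR S).
  { apply contR_Rsum. intros i Hi. apply contR_plus; apply contR_abs; [apply contC_fst | apply contC_snd]; auto. }
  destruct (compact_bounded S Hc HS) as [M HM]. exists (Rabs M). split; [apply Rabs_pos|].
  intros i x Hi. assert (Hle : Rabs (fst (u i x)) + Rabs (snd (u i x)) <= S x).
  { apply (Rsum_ge_elem N (fun i => Rabs (fst (u i x)) + Rabs (snd (u i x)))); auto.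
    intros j _. pose proof (Rabs_pos (fst (u j x))). pose proof (Rabs_pos (snd (u j x))). lra. }
  specialize (HM x). pose proof (Rle_abs M). pose proof (Rle_abs (S x)).
  pose proof (Rabs_pos (fst (u i x))). pose proof (Rabs_pos (snd (u i x))). lra.
Qed.

Lemma fibre_enumeration {X : Type} (phi : X -> X) (B : nat) y :
  (forall l, NoDup l -> (forall z, In z l -> phi z = y) -> (length l <= B)%nat) ->
  exists l, NoDup l /\ forall x, In x l <-> phi x = y.
Proof.
  intros HB.
  assert (H : forall m l, NoDup l -> (forall z, In z l -> phi z = y) -> (B - length l <= m)%nat ->
            exists l', NoDup l' /\ forall x, In x l' <-> phi x = y).
  { induction m; intros l Hnd Hl Hm;
      (destruct (classic (forall x, phi x = y -> In x l)) as [Hall|Hn];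
       [exists l; split; auto; intros x; split; auto|]);
      apply not_all_ex_not in Hn; destruct Hn as [x Hx];
      assert (Hnd' : NoDup (x :: l)) by (constructor; tauto);
      assert (Hl' : forall z, In z (x :: l) -> phi z = y) by (intros z [<-|?]; [tauto|auto]).
    - specialize (HB _ Hnd' Hl'). simpl in HB. lia.
    - apply (IHm (x :: l)); auto. simpl. lia. }
  apply (H B nil); simpl; [constructor | tauto | lia].
Qed.

Section Finite_type.
Context {X : TopSpace}.
Variables (phi : X -> X) (L : (X -> Cplx) -> (X -> Cplx)).
Hypotheses (HT : is_transfer_operator phi L) (HXc : compact_space X) (HXh : hausdorff X)
  (Hphic : top_continuous phi).
Variables (N : nat) (u : nat -> X -> Cplx).
Hypothesis Hqb : is_quasi_basis phi L N u.

(* Expanding [e] in the quasi-basis at [x] bounds [e x = 1] by [L e (phi x)] times a constant. *)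
Lemma quasi_basis_bump_lower (M : R) (e : X -> R) x :
  (forall i x, (i < N)%nat -> Rabs (fst (u i x)) <= M /\ Rabs (snd (u i x)) <= M) ->
  contR e -> (forall z, 0 <= e z <= 1) -> e x = 1 ->
  1 <= 2 * INR N * M * M * fst (L (RtoC_fun e) (phi x)).
Proof.
  destruct Hqb as [Hu HQ]. intros HM Hec He01 Hexx. set (c := fst (L (RtoC_fun e) (phi x))).
  assert (Hq := HQ (RtoC_fun e) (contC_RtoC _ Hec) x). apply (f_equal fst) in Hq.
  unfold RtoC_fun at 1 in Hq. simpl in Hq. rewrite Hexx, fst_Csum in Hq. unfold alpha_of in Hq.
  apply Rle_trans with (INR N * (2 * M * M * c)); [|right; ring].
  rewrite Hq, <- Rsum_const. apply Rsum_le. intros i Hi.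
  assert (Hbc : contC (fun z => Cmul (Cconj (u i z)) (RtoC_fun e z)))
    by (apply contC_mul; [apply contC_conj; auto | apply contC_RtoC; auto]).
  rewrite (L_re_im phi L HT _ _ Hbc).
  set (p := fst (L (RtoC_fun (fun z => fst (Cmul (Cconj (u i z)) (RtoC_fun e z)))) (phi x))).
  set (q := fst (L (RtoC_fun (fun z => snd (Cmul (Cconj (u i z)) (RtoC_fun e z)))) (phi x))). simpl.
  destruct (HM i x Hi) as [Hm1 Hm2].
  assert (B1 : Rabs p <= M * c).
  { apply (L_abs_bound phi L HT); auto; [apply contC_fst; auto|]. intros z. unfold RtoC_fun; simpl.
    destruct (HM i z Hi) as [Hz1 _]. specialize (He01 z).
    replace (fst (u i z) * e z - - snd (u i z) * 0) with (fst (u i z) * e z) by ring.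
    rewrite Rabs_mult, (Rabs_pos_eq (e z)) by lra. apply Rmult_le_compat_r; lra. }
  assert (B2 : Rabs q <= M * c).
  { apply (L_abs_bound phi L HT); auto; [apply contC_snd; auto|]. intros z. unfold RtoC_fun; simpl.
    destruct (HM i z Hi) as [_ Hz2]. specialize (He01 z).
    replace (fst (u i z) * 0 + - snd (u i z) * e z) with (- snd (u i z) * e z) by ring.
    rewrite Rabs_mult, Rabs_Ropp, (Rabs_pos_eq (e z)) by lra. apply Rmult_le_compat_r; lra. }
  assert (fst (u i x) * p <= M * (M * c)).
  { apply Rle_trans with (Rabs (fst (u i x) * p)); [apply Rle_abs|]. rewrite Rabs_mult.
    apply Rmult_le_compat; auto; apply Rabs_pos. }
  assert (- (snd (u i x) * q) <= M * (M * c)).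
  { apply Rle_trans with (Rabs (snd (u i x) * q)); [rewrite <- Rabs_Ropp; apply Rle_abs|].
    rewrite Rabs_mult. apply Rmult_le_compat; auto; apply Rabs_pos. }
  lra.
Qed.

(* Bumps with disjoint supports at the points of a fibre have [L]-values summing to at most [L 1 = 1],
   and each is bounded below by the previous lemma. *)
Lemma fibres_bounded : exists B : nat, forall y l, NoDup l -> (forall z, In z l -> phi z = y) ->
  (length l <= B)%nat.
Proof.
  destruct (contC_family_bounded N u HXc (proj1 Hqb)) as [M [HM0 HM]].
  set (K := 2 * INR N * M * M). destruct (archimed K) as [Ha _].
  exists (Z.to_nat (up K)). intros y l Hnd Hl.
  destruct (bumps_family HXc HXh l) as [E [HE1 [HE2 _]]].
  set (c := fun x => fst (L (RtoC_fun (E x)) y)).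
  assert (Hc1 : forall x, In x l -> 1 <= K * c x).
  { intros x Hx. destruct (HE1 x Hx) as [Hec [He01 Hexx]]. unfold c. rewrite <- (Hl x Hx).
    apply quasi_basis_bump_lower; auto. }
  assert (Hsum : Rsum_list l c <= 1).
  { unfold c. rewrite <- (L_Rsum_list phi L HT l E y) by (intros; apply HE1; auto).
    rewrite <- (L_one_real phi L HT y). apply (L_mono phi L HT).
    - apply contR_Rsum_list; intros; apply HE1; auto.
    - apply contR_const.
    - intros z. apply Rsum_list_disjoint_le_1; auto; [intros i Hi; apply HE1; auto|].
      intros x1 x2 H1 H2 Hz1 Hz2. apply (HE2 x1 x2 z); auto. }
  assert (HK0 : 0 <= K) by (unfold K; pose proof (pos_INR N); apply Rmult_le_pos; [apply Rmult_le_pos; [apply Rmult_le_pos|]|]; lra).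
  assert (Hlen : INR (length l) <= K).
  { rewrite <- (Rmult_1_r (INR (length l))), <- Rsum_list_const.
    apply Rle_trans with (Rsum_list l (fun x => K * c x)); [apply Rsum_list_le; auto|].
    rewrite Rsum_list_scal. rewrite <- (Rmult_1_r K) at 2. apply Rmult_le_compat_l; auto. }
  assert (Hup : (0 <= up K)%Z) by (apply le_IZR; lra).
  assert (INR (Z.to_nat (up K)) = IZR (up K)) by (rewrite INR_IZR_INZ, Z2Nat.id; auto).
  apply INR_le. lra.
Qed.

Definition qb_norm2 (z : X) : R := Rsum N (fun i => fst (u i z) * fst (u i z) + snd (u i z) * snd (u i z)).

(* Apply the quasi-basis identity to a bump at [x]. *)
Lemma fibre_weight_inverse y l w E : NoDup l -> (forall x, In x l <-> phi x = y) ->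
  (forall x, In x l -> contR (E x) /\ E x x = 1 /\ forall z, In z l -> z <> x -> E x z = 0) ->
  (forall a, contC a -> L a y = Csum_list l (fun x => Cmul (RtoC (w x)) (a x))) ->
  forall x, In x l -> w x * qb_norm2 x = 1.
Proof.
  destruct Hqb as [Hu HQ]. intros Hnd Hl HE Hw x Hx. destruct (HE x Hx) as [HEc [HExx HE0]].
  assert (Hq := HQ (RtoC_fun (E x)) (contC_RtoC _ HEc) x). apply (f_equal fst) in Hq.
  unfold RtoC_fun at 1 in Hq. rewrite HExx in Hq. simpl in Hq. rewrite fst_Csum in Hq.
  unfold alpha_of in Hq. rewrite (proj1 (Hl x) Hx) in Hq. rewrite Hq. unfold qb_norm2. rewrite <- Rsum_scal.
  apply Rsum_ext. intros i Hi.
  rewrite Hw by (apply contC_mul; [apply contC_conj; auto | apply contC_RtoC; auto]).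
  rewrite (Csum_list_single l _ x Hnd Hx).
  - unfold RtoC_fun. rewrite HExx. simpl. ring.
  - intros z Hz Hzx. unfold RtoC_fun. rewrite HE0; auto. Cring.
Qed.

Lemma fibre_sum_of_finite_type : fibre_rep phi L (fun x => / qb_norm2 x).
Proof.
  destruct fibres_bounded as [B HB].
  assert (Hfl : forall y, exists l, NoDup l /\ forall x, In x l <-> phi x = y)
    by (intros y; apply (fibre_enumeration phi B y); intros; apply (HB y); auto).
  assert (Hrep : forall y, exists l w, NoDup l /\ (forall x, In x l <-> phi x = y) /\
     (forall x, In x l -> w x * qb_norm2 x = 1) /\
     forall a, contC a -> L a y = Csum_list l (fun x => Cmul (RtoC (w x)) (a x))).
  { intros y. destruct (Hfl y) as [l [Hnd Hl]].
    destruct (L_on_finite_fibre phi L HT HXc HXh Hphic y l Hnd Hl) as [w [E [HE Hw]]].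
    exists l, w. split; [auto | split; [auto | split; [|auto]]].
    apply (fibre_weight_inverse y l w E); auto. }
  assert (Hpos : forall z, 0 < qb_norm2 z).
  { intros z. destruct (Hrep (phi z)) as [l [w [_ [Hl [Hw1 _]]]]].
    assert (H1 := Hw1 z (proj2 (Hl z) eq_refl)).
    assert (0 <= qb_norm2 z) by (apply Rsum_nonneg; intros; nra).
    destruct H as [?|E0]; auto. rewrite <- E0 in H1. lra. }
  assert (Hwinv : forall l w x, (forall x, In x l -> w x * qb_norm2 x = 1) -> In x l -> w x = / qb_norm2 x).
  { intros l w x Hw Hx. specialize (Hw x Hx). specialize (Hpos x).
    apply (Rmult_eq_reg_r (qb_norm2 x)); [rewrite Hw, Rinv_l|]; lra. }
  assert (Hfib : forall y, exists l, NoDup l /\ (forall x, In x l <-> phi x = y) /\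
     Rsum_list l (fun x => / qb_norm2 x) = 1 /\
     forall a, contC a -> L a y = Csum_list l (fun x => Cmul (RtoC (/ qb_norm2 x)) (a x))).
  { intros y. destruct (Hrep y) as [l [w [Hnd [Hl [Hw1 Hw]]]]].
    exists l. split; [auto | split; [auto | split]].
    - assert (H1 := Hw (fun _ => Defs.C1) (contC_const _)). rewrite (L_one phi L HT) in H1.
      apply (f_equal fst) in H1. rewrite fst_Csum_list in H1. simpl in H1.
      rewrite H1. apply Rsum_list_ext. intros x Hx. rewrite (Hwinv l w x); auto. ring.
    - intros a Ha. rewrite Hw; auto. apply Csum_list_ext. intros x Hx. rewrite (Hwinv l w x); auto. }
  split; [|split; [|exact Hfib]].
  - apply contR_inv; [|intros z; specialize (Hpos z); lra].
    apply contR_Rsum. intros i Hi. destruct Hqb as [Hu _].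
    apply contR_plus; apply contR_mult; first [apply contC_fst | apply contC_snd]; auto.
  - intros x. split; [apply Rinv_0_lt_compat; auto|].
    destruct (Hfib (phi x)) as [l [_ [Hl [Hs _]]]]. rewrite <- Hs.
    apply (Rsum_list_ge_elem l (fun x => / qb_norm2 x)); [|apply Hl; auto].
    intros; left; apply Rinv_0_lt_compat; auto.
Qed.

End Finite_type.

(** * Local homeomorphisms are of finite type *)

Lemma local_homeo_finite_cover {X : TopSpace} (phi : X -> X) : compact_space X -> local_homeo phi ->
  exists n U, open_cover_homeo phi n U /\ (forall i, (i < n)%nat -> is_open (img phi (U i))).
Proof.
  intros Hc [_ Hl]. destruct (choice _ Hl) as [G HG].
  destruct (compact_full Hc G) as [lz [_ Hlz]]. { intros z _. destruct (HG z) as [? [? ?]]; auto. }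
  exists (length lz), (fun i => match nth_error lz i with Some z => G z | None => fun _ => False end).
  assert (Hnth : forall i, (i < length lz)%nat -> exists z, nth_error lz i = Some z)
    by (intros i Hi; destruct (nth_error lz i) eqn:E; [eauto | apply nth_error_None in E; lia]).
  split; [split|].
  - intros i Hi. destruct (Hnth i Hi) as [z ->]. destruct (HG z) as [? [? [? ?]]]; auto.
  - intros x. destruct (Hlz x I) as [z [Hz Gx]]. apply In_nth_error in Hz. destruct Hz as [i Hi].
    exists i. split; [apply nth_error_Some; congruence | rewrite Hi; auto].
  - intros i Hi. destruct (Hnth i Hi) as [z ->]. destruct (HG z) as [? [? [? ?]]]; auto.
Qed.

Definition is_section_on {X : TopSpace} (phi : X -> X) (U : X -> Prop) (s : X -> X) :=
  forall y, img phi U y -> U (s y) /\ phi (s y) = y.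

(* Meant for [b] supported in [U]. *)
Definition push_section {X : TopSpace} (phi : X -> X) (U : X -> Prop) (s : X -> X)
    (b : X -> Cplx) (y : X) : Cplx :=
  if excluded_middle_informative (img phi U y) then b (s y) else Defs.C0.

Section Push_section.
Context {X : TopSpace}.
Variables (phi : X -> X) (U : X -> Prop) (s : X -> X).

Lemma push_section_ext (f g : X -> Cplx) y :
  (forall x, f x = g x) -> push_section phi U s f y = push_section phi U s g y.
Proof. intros H. unfold push_section. destruct (excluded_middle_informative _); auto. Qed.

Lemma push_section_add (f g : X -> Cplx) y :
  push_section phi U s (fun x => Cadd (f x) (g x)) y = Cadd (push_section phi U s f y) (push_section phi U s g y).
Proof. unfold push_section. destruct (excluded_middle_informative _); auto. Cring. Qed.

Lemma push_section_scal c (f : X -> Cplx) y :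
  push_section phi U s (fun x => Cmul c (f x)) y = Cmul c (push_section phi U s f y).
Proof. unfold push_section. destruct (excluded_middle_informative _); auto. Cring. Qed.

Lemma push_section_module (a f : X -> Cplx) y : is_section_on phi U s ->
  push_section phi U s (fun x => Cmul (a (phi x)) (f x)) y = Cmul (a y) (push_section phi U s f y).
Proof.
  intros Hs. unfold push_section. destruct (excluded_middle_informative _) as [H|H]; [|Cring].
  destruct (Hs y H) as [_ ->]; auto.
Qed.

Lemma Cmod_diag_C0 : Cmod (Cadd Defs.C0 (Copp Defs.C0)) = 0.
Proof.
  unfold Cmod; Csimpl. replace ((0 + - 0) * (0 + - 0) + (0 + - 0) * (0 + - 0)) with 0 by ring.
  apply sqrt_0.
Qed.

(* Off [phi(U)] the push vanishes on a neighbourhood: [phi(supp b)] is compact and misses [y]. *)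
Lemma contC_push_section (b : X -> Cplx) : compact_space X -> hausdorff X -> top_continuous phi ->
  is_open (img phi U) -> homeo_onto_image phi U -> is_section_on phi U s -> contC b ->
  (forall z, top_closure (fun z => b z <> Defs.C0) z -> U z) -> contC (push_section phi U s b).
Proof.
  intros Hc Hh Hpc HiU [Hinj Hhom] Hs Hb Hsupp y eps He.
  destruct (classic (img phi U y)) as [Hy|Hy].
  - destruct (Hs y Hy) as [Usy Esy]. destruct (Hb (s y) eps He) as [V [HV [Vsy HVb]]].
    destruct (Hhom V HV) as [W [HW HWe]].
    exists (fun y' => W y' /\ img phi U y'). split; [apply open_inter; auto|]. split.
    + apply HWe. exists (s y); auto.
    + intros y' [Wy' Uy']. assert (H1 : img phi (fun x => U x /\ V x) y') by (apply (proj2 (HWe y')); split; auto).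
      destruct H1 as [z [[Uz Vz] Ez]]. destruct (Hs y' Uy') as [Usy' Esy'].
      assert (s y' = z) by (apply Hinj; auto; congruence). unfold push_section.
      destruct (excluded_middle_informative (img phi U y')); [|contradiction].
      destruct (excluded_middle_informative (img phi U y)); [|contradiction]. subst z. auto.
  - set (K := top_closure (fun z => b z <> Defs.C0)).
    assert (HK : compact_set (img phi K)) by (apply compact_image, closed_compact, closure_closed; auto).
    assert (HyK : ~ img phi K y) by (intros [z [Kz Ez]]; apply Hy; exists z; split; auto).
    destruct (hausdorff_sep_point_compact (img phi K) y Hh HK HyK) as [O [V [HO [HV [Oy [HKV Hd]]]]]].
    exists O. repeat split; auto. intros y' Oy'.
    assert (E : push_section phi U s b y' = Defs.C0).
    { unfold push_section. destruct (excluded_middle_informative (img phi U y')) as [H|H]; auto.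
      apply NNPP. intros Hn. apply (Hd y'). split; auto. apply HKV. exists (s y').
      split; [apply closure_incl; auto | apply Hs; auto]. }
    assert (E' : push_section phi U s b y = Defs.C0)
      by (unfold push_section; destruct (excluded_middle_informative (img phi U y)); [contradiction | auto]).
    rewrite E, E', Cmod_diag_C0. auto.
Qed.

End Push_section.

Section Averaging_operator.
Context {X : TopSpace}.
Variables (phi : X -> X).
Hypotheses (HXc : compact_space X) (HXh : hausdorff X) (Hphic : top_continuous phi)
  (Hphis : forall y, exists x, phi x = y).
Variables (n : nat) (U : nat -> X -> Prop) (v : nat -> X -> R) (s : nat -> X -> X).
Hypotheses (HU : open_cover_homeo phi n U) (HUi : forall i, (i < n)%nat -> is_open (img phi (U i)))
  (Hv : partition_of_unity_subordinate n U v) (Hs : forall i, is_section_on phi (U i) (s i)).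

Let push i b := push_section phi (U i) (s i) b.

(* [fibre_count y] is the number of points over [y]: each of them contributes [sum_i v i x = 1]. *)
Definition fibre_count (y : X) : R := Rsum n (fun i => fst (push i (RtoC_fun (v i)) y)).

Definition averaging (a : X -> Cplx) (y : X) : Cplx :=
  Cmul (RtoC (/ fibre_count y)) (Csum n (fun i => push i (fun x => Cmul (RtoC (v i x)) (a x)) y)).

Lemma v_support i z : (i < n)%nat -> v i z <> 0 -> U i z.
Proof. intros Hi Hz. apply (proj1 Hv i Hi). apply closure_incl; auto. Qed.

Lemma U_inj i x1 x2 : (i < n)%nat -> U i x1 -> U i x2 -> phi x1 = phi x2 -> x1 = x2.
Proof. intros Hi. apply (proj1 HU i Hi). Qed.

Lemma contC_push_v i a : (i < n)%nat -> contC a -> contC (push i (fun x => Cmul (RtoC (v i x)) (a x))).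
Proof.
  intros Hi Ha. destruct (proj1 Hv i Hi) as [Hvc [_ Hvs]].
  apply contC_push_section; auto; [apply (proj1 HU i Hi) | apply contC_mul; auto; apply contC_RtoC; auto|].
  intros z Hz. apply Hvs. apply (closure_mono (fun z => Cmul (RtoC (v i z)) (a z) <> Defs.C0)); auto.
  intros w Hw E. apply Hw. rewrite E. Cring.
Qed.

Lemma push_v_value i y : push i (RtoC_fun (v i)) y =
  RtoC (if excluded_middle_informative (img phi (U i) y) then v i (s i y) else 0).
Proof. unfold push, push_section. destruct (excluded_middle_informative _); reflexivity. Qed.

Lemma fibre_count_ge_1 y : 1 <= fibre_count y.
Proof.
  destruct (Hphis y) as [x <-]. rewrite <- (proj2 Hv x). unfold fibre_count. apply Rsum_le. intros i Hi.
  rewrite push_v_value. simpl. destruct (proj1 Hv i Hi) as [_ [H01 _]].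
  destruct (excluded_middle_informative _) as [Hi'|Hi'].
  - destruct (Req_dec (v i x) 0) as [E|E]; [rewrite E; apply H01|].
    destruct (Hs i (phi x) Hi') as [U1 E1]. rewrite (U_inj i (s i (phi x)) x); auto.
    + lra.
    + apply v_support; auto.
  - destruct (Req_dec (v i x) 0) as [E|E]; [lra|]. exfalso; apply Hi'. exists x; split; auto.
    apply v_support; auto.
Qed.

Lemma contR_fibre_count : contR fibre_count.
Proof.
  apply contR_Rsum; intros i Hi. apply contC_fst.
  apply (contC_ext (push i (fun x => Cmul (RtoC (v i x)) Defs.C1))).
  - intros y. apply push_section_ext. intros x. unfold RtoC_fun. Cring.
  - apply contC_push_v, contC_const; auto.
Qed.

Lemma averaging_transfer : is_transfer_operator phi averaging.
Proof.
  assert (HNpos : forall y, 0 < / fibre_count y)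
    by (intros y; pose proof (fibre_count_ge_1 y); apply Rinv_0_lt_compat; lra).
  split; [|split; [|split; [|split; [|split]]]].
  - intros a Ha. apply contC_mul.
    + apply contC_RtoC, contR_inv; [apply contR_fibre_count|]. intros y; pose proof (fibre_count_ge_1 y); lra.
    + apply contC_Csum. intros i Hi; apply contC_push_v; auto.
  - intros a b Ha Hb y. unfold averaging.
    rewrite (Csum_ext n _ (fun i => Cadd (push i (fun x => Cmul (RtoC (v i x)) (a x)) y)
                                         (push i (fun x => Cmul (RtoC (v i x)) (b x)) y))).
    + rewrite Csum_add. Cring.
    + intros i Hi. unfold push. rewrite <- push_section_add. apply push_section_ext. intros; Cring.
  - intros c a Ha y. unfold averaging.
    rewrite (Csum_ext n _ (fun i => Cmul c (push i (fun x => Cmul (RtoC (v i x)) (a x)) y))).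
    + rewrite Csum_scal. Cring.
    + intros i Hi. unfold push. rewrite <- push_section_scal. apply push_section_ext. intros; Cring.
  - intros a Ha Hpos y. unfold averaging.
    assert (Hsum : Cnonneg (Csum n (fun i => push i (fun x => Cmul (RtoC (v i x)) (a x)) y))).
    { apply Csum_nonneg. intros i Hi. unfold push, push_section. destruct (excluded_middle_informative _).
      - destruct (Hpos (s i y)) as [P1 P2]. destruct (proj1 Hv i Hi) as [_ [H01 _]]. specialize (H01 (s i y)).
        unfold Cnonneg; Csimpl. rewrite P1. split; [ring | nra].
      - unfold Cnonneg; Csimpl; lra. }
    destruct Hsum as [P1 P2]. specialize (HNpos y). unfold Cnonneg; Csimpl. rewrite P1. split; [ring | nra].
  - intros y. unfold averaging.
    rewrite (Csum_ext n _ (fun i => push i (RtoC_fun (v i)) y))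
      by (intros i Hi; apply push_section_ext; intros; unfold RtoC_fun; Cring).
    pose proof (fibre_count_ge_1 y).
    apply Cplx_eq; Csimpl; rewrite fst_Csum, snd_Csum; fold (fibre_count y).
    + field; lra.
    + rewrite (Rsum_ext n _ (fun _ => 0)), Rsum_0; [ring|].
      intros i Hi. rewrite push_v_value. reflexivity.
  - intros a b Ha Hb y. unfold averaging, alpha_of.
    rewrite (Csum_ext n _ (fun i => Cmul (a y) (push i (fun x => Cmul (RtoC (v i x)) (b x)) y))).
    + rewrite Csum_scal. Cring.
    + intros i Hi. unfold push. rewrite <- push_section_module by auto.
      apply push_section_ext. intros; Cring.
Qed.

(* [u_i = sqrt (v_i / rho)] with the weight [rho = 1 / fibre_count o phi] of the averaging operator. *)
Definition averaging_qb (i : nat) (x : X) : R := sqrt (v i x * fibre_count (phi x)).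

Lemma averaging_qb_sqr i x : (i < n)%nat -> averaging_qb i x * averaging_qb i x = v i x * fibre_count (phi x).
Proof.
  intros Hi. apply sqrt_sqrt. destruct (proj1 Hv i Hi) as [_ [H01 _]]. specialize (H01 x).
  pose proof (fibre_count_ge_1 (phi x)). nra.
Qed.

Lemma averaging_qb_zero i x : v i x = 0 -> averaging_qb i x = 0.
Proof. intros E. unfold averaging_qb. rewrite E, Rmult_0_l. apply sqrt_0. Qed.

(* Only the point [x] itself contributes, as [v j] lives on [U j] where [phi] is injective. *)
Lemma averaging_qb_term i j x a : (i < n)%nat -> (j < n)%nat ->
  Cmul (RtoC (averaging_qb i x))
       (push j (fun z => Cmul (RtoC (v j z)) (Cmul (Cconj (RtoC (averaging_qb i z))) (a z))) (phi x))
  = Cmul (RtoC (v j x * (averaging_qb i x * averaging_qb i x))) (a x).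
Proof.
  intros Hi Hj. unfold push, push_section. destruct (excluded_middle_informative _) as [Him|Him].
  - destruct (Hs j (phi x) Him) as [Ux' Ex']. set (x' := s j (phi x)) in *.
    destruct (classic (U j x)) as [Ujx|Ujx].
    + assert (x' = x) by (apply (U_inj j); auto). rewrite H. Cring.
    + assert (Evj : v j x = 0) by (apply NNPP; intro E; apply Ujx; apply v_support; auto). rewrite Evj.
      destruct (Req_dec (v i x) 0) as [E|E]; [rewrite (averaging_qb_zero i x E); Cring|].
      assert (Evi : v i x' = 0).
      { apply NNPP; intro E'. apply Ujx.
        assert (x' = x) by (apply (U_inj i); auto; apply v_support; auto). congruence. }
      rewrite (averaging_qb_zero i x' Evi). Cring.
  - assert (Evj : v j x = 0).
    { apply NNPP; intro E. apply Him. exists x; split; auto. apply v_support; auto. }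
    rewrite Evj. Cring.
Qed.

Lemma averaging_quasi_basis : is_quasi_basis phi averaging n (fun i x => RtoC (averaging_qb i x)).
Proof.
  split.
  - intros i Hi. apply contC_RtoC, contR_sqrt.
    + apply contR_mult; [apply Hv; auto | apply contR_compose_cont; auto; apply contR_fibre_count].
    + intros z. rewrite <- averaging_qb_sqr by auto. apply Rle_0_sqr.
  - intros a Ha x. unfold alpha_of.
    rewrite (Csum_ext n _ (fun i => Cmul (RtoC (v i x)) (a x))); [rewrite Csum_RtoC_mul, (proj2 Hv); Cring|].
    intros i Hi. unfold averaging.
    set (F := fun j => push j (fun z => Cmul (RtoC (v j z)) (Cmul (Cconj (RtoC (averaging_qb i z))) (a z))) (phi x)).
    transitivity (Cmul (RtoC (/ fibre_count (phi x))) (Csum n (fun j => Cmul (RtoC (averaging_qb i x)) (F j))));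
      [rewrite Csum_scal; Cring|].
    rewrite (Csum_ext n _ (fun j => Cmul (RtoC (v j x * (averaging_qb i x * averaging_qb i x))) (a x)))
      by (intros; apply averaging_qb_term; auto).
    rewrite Csum_RtoC_mul, (Rsum_ext n _ (fun j => (averaging_qb i x * averaging_qb i x) * v j x)) by (intros; ring).
    rewrite Rsum_scal, (proj2 Hv), averaging_qb_sqr by auto. pose proof (fibre_count_ge_1 (phi x)).
    apply Cplx_eq; Csimpl; field; lra.
Qed.

End Averaging_operator.

Lemma alpha_finite_type_of_local_homeo {X : TopSpace} (phi : X -> X) :
  compact_space X -> hausdorff X -> (forall y, exists x, phi x = y) -> local_homeo phi ->
  alpha_finite_type phi.
Proof.
  intros Hc Hh Hphis HLH.
  destruct (local_homeo_finite_cover phi Hc HLH) as [n [U [[HU Hcov] HUi]]].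
  destruct (partition_of_unity_exists Hc Hh n U (fun i Hi => proj1 (HU i Hi)) Hcov) as [v Hv].
  assert (Hsx : forall p : nat * X, exists x, img phi (U (fst p)) (snd p) -> U (fst p) x /\ phi x = snd p).
  { intros [i y]; simpl. destruct (classic (img phi (U i) y)) as [[x [? ?]]|H]; [exists x | exists y]; tauto. }
  destruct (choice _ Hsx) as [sf Hsf].
  assert (Hs : forall i, is_section_on phi (U i) (fun y => sf (i, y)))
    by (intros i y Hy; apply (Hsf (i, y)); auto).
  exists (averaging phi n U v (fun i y => sf (i, y))). split.
  - apply averaging_transfer; auto. apply HLH. split; auto.
  - exists n, (fun i x => RtoC (averaging_qb phi n U v (fun i y => sf (i, y)) i x)).
    apply averaging_quasi_basis; auto; [apply HLH | split; auto].
Qed.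

Theorem mainTheorem14 (X : TopSpace) (HXc : compact_space X) (HXh : hausdorff X)
    (phi : X -> X) (Hphic : top_continuous phi) (Hphis : forall y, exists x, phi x = y) :
  (alpha_finite_type phi <-> local_homeo phi) /\
  forall L : (X -> Cplx) -> (X -> Cplx), is_transfer_operator phi L ->
    (transfer_finite_type phi L <-> exists rho, fibre_rep phi L rho) /\
    (forall rho, fibre_rep phi L rho ->
       local_homeo phi /\
       forall (n : nat) (U : nat -> X -> Prop) (v : nat -> X -> R),
         open_cover_homeo phi n U -> partition_of_unity_subordinate n U v ->
         is_quasi_basis phi L n (fun i x => RtoC (sqrt (v i x / rho x)))).
Proof.
  assert (Hfin : forall L, is_transfer_operator phi L -> transfer_finite_type phi L ->
                   exists rho, fibre_rep phi L rho).
  { intros L HT [N [u Hqb]]. eexists. apply (fibre_sum_of_finite_type phi L HT HXc HXh Hphic N u Hqb). }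
  assert (Hlh : forall L rho, is_transfer_operator phi L -> fibre_rep phi L rho -> local_homeo phi)
    by (intros L rho HT HF; apply (local_homeo_of_fibre_sum phi L rho HF HT HXc HXh Hphic)).
  split; [split|].
  - intros [L [HT HTF]]. destruct (Hfin L HT HTF) as [rho HF]. apply (Hlh L rho HT HF).
  - apply alpha_finite_type_of_local_homeo; auto.
  - intros L HT. split; [split|].
    + apply Hfin; auto.
    + intros [rho HF]. destruct (local_homeo_finite_cover phi HXc (Hlh L rho HT HF)) as [n [U [[HU Hcov] _]]].
      destruct (partition_of_unity_exists HXc HXh n U (fun i Hi => proj1 (HU i Hi)) Hcov) as [v Hv].
      exists n, (fun i x => RtoC (sqrt (v i x / rho x))).
      apply (quasi_basis_of_fibre_sum phi L rho HF n U v); auto. split; auto.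
    + intros rho HF. split; [apply (Hlh L rho HT HF)|].
      intros n U v HU Hv. apply (quasi_basis_of_fibre_sum phi L rho HF n U v); auto.
Qed.
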